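(* In the sequent calculus $\mathsf{S.ConstCKCEM}$, the rules $\mathsf{w_L}$ (from $\Gamma\Rightarrow\Delta$ infer $\Gamma,\varphi\Rightarrow\Delta$), $\mathsf{w_R}$ (from $\Gamma\Rightarrow$ infer $\Gamma\Rightarrow\varphi$) and $\mathsf{c}$ (from $\Gamma,\varphi,\varphi\Rightarrow\Delta$ infer $\Gamma,\varphi\Rightarrow\Delta$) are height-preserving admissible, and $\mathsf{cut}$ (from $\Gamma\Rightarrow\varphi$ and $\Gamma',\varphi\Rightarrow\Delta$ infer $\Gamma,\Gamma'\Rightarrow\Delta$) is admissible. Moreover, a sequent $\Gamma\Rightarrow\Delta$ is derivable in $\mathsf{S.ConstCKCEM}$ if and only if $\iota(\Gamma\Rightarrow\Delta)$ is derivable in $\mathsf{ConstCKCEM}$.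
   Context: Language $\mathcal{L}$: formulas $\varphi ::= p \mid \bot \mid \varphi\wedge\varphi \mid \varphi\vee\varphi \mid \varphi\to\varphi \mid \varphi \mathrel{\Box\!\!\to} \varphi \mid \varphi \mathrel{\Diamond\!\!\to}\varphi$; $\neg\varphi:=\varphi\to\bot$, $\top:=\neg\bot$, $\varphi\leftrightarrow\psi:=(\varphi\to\psi)\wedge(\psi\to\varphi)$. $\mathsf{ConstCK}$: any axiomatisation of intuitionistic propositional logic in $\mathcal{L}$ with modus ponens, plus CM$_\Box$: $(\varphi\mathrel{\Box\!\!\to}\psi\wedge\chi)\to(\varphi\mathrel{\Box\!\!\to}\psi)\wedge(\varphi\mathrel{\Box\!\!\to}\chi)$; CC$_\Box$: $(\varphi\mathrel{\Box\!\!\to}\psi)\wedge(\varphi\mathrel{\Box\!\!\to}\chi)\to(\varphi\mathrel{\Box\!\!\to}\psi\wedge\chi)$; CN$_\Box$: $\varphi\mathrel{\Box\!\!\to}\top$; CN$_\Diamond$: $\neg(\varphi\mathrel{\Diamond\!\!\to}\bot)$; CK$_\Diamond$: $(\varphi\mathrel{\Box\!\!\to}(\psi\to\chi))\to((\varphi\mathrel{\Diamond\!\!\to}\psi)\to(\varphi\mathrel{\Diamond\!\!\to}\chi))$; rules RA$_\Box$: from $\varphi\leftrightarrow\rho$ infer $(\varphi\mathrel{\Box\!\!\to}\psi)\leftrightarrow(\rho\mathrel{\Box\!\!\to}\psi)$; RC$_\Box$: from $\psi\leftrightarrow\chi$ infer $(\varphi\mathrel{\Box\!\!\to}\psi)\leftrightarrow(\varphi\mathrel{\Box\!\!\to}\chi)$;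 RA$_\Diamond$, RC$_\Diamond$: same with $\mathrel{\Diamond\!\!\to}$. $\mathsf{ConstCKCEM}$ = $\mathsf{ConstCK}$ + CEM$_\Diamond$: $(\varphi\mathrel{\Diamond\!\!\to}\psi)\wedge(\varphi\mathrel{\Diamond\!\!\to}\chi)\to(\varphi\mathrel{\Diamond\!\!\to}\psi\wedge\chi)$. A sequent $\Gamma\Rightarrow\Delta$ is a pair of finite multisets with $|\Delta|\le1$; $\varphi\Leftrightarrow\rho$ abbreviates $\varphi\Rightarrow\rho$ and $\rho\Rightarrow\varphi$. $\iota(\Gamma\Rightarrow\Delta)=\bigwedge\Gamma\to\bigvee\Delta$ if $\Gamma\neq\emptyset$, $\bigvee\Delta$ otherwise, $\bigvee\emptyset=\bot$. Rules of $\mathsf{S.ConstCKCEM}$ (premisses / conclusion, $0\le|\Delta|\le1$, $n,k\ge0$): init: $\Gamma,p\Rightarrow p$; $\bot_L$: $\Gamma,\bot\Rightarrow\Delta$; $\wedge_L$: $\Gamma,\varphi,\psi\Rightarrow\Delta$ / $\Gamma,\varphi\wedge\psi\Rightarrow\Delta$; $\wedge_R$: $\Gamma\Rightarrow\varphi$, $\Gamma\Rightarrow\psi$ / $\Gamma\Rightarrow\varphi\wedge\psi$; $\vee_L$: $\Gamma,\varphi\Rightarrow\Delta$, $\Gamma,\psi\Rightarrow\Delta$ / $\Gamma,\varphi\vee\psi\Rightarrow\Delta$; $\vee_R^1$: $\Gamma\Rightarrow\varphi$ / $\Gamma\Rightarrow\varphi\vee\psi$; $\vee_R^2$: $\Gamma\Rightarrow\psi$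 / $\Gamma\Rightarrow\varphi\vee\psi$; $\to_R$: $\Gamma,\varphi\Rightarrow\psi$ / $\Gamma\Rightarrow\varphi\to\psi$; $\to_L$: $\Gamma,\varphi\to\psi\Rightarrow\varphi$, $\Gamma,\psi\Rightarrow\Delta$ / $\Gamma,\varphi\to\psi\Rightarrow\Delta$; $\Box$: $\{\varphi\Leftrightarrow\rho_i\}_{i\le n}$, $\sigma_1,\dots,\sigma_n\Rightarrow\psi$ / $\Gamma,\rho_1\mathrel{\Box\!\!\to}\sigma_1,\dots,\rho_n\mathrel{\Box\!\!\to}\sigma_n\Rightarrow\varphi\mathrel{\Box\!\!\to}\psi$; $\Diamond^{cem}$: $\{\varphi\Leftrightarrow\rho_i\}_{i\le n}$, $\{\varphi\Leftrightarrow\xi_j\}_{j\le k}$, $\varphi\Leftrightarrow\eta$, $\sigma_1,\dots,\sigma_n,\chi_1,\dots,\chi_k,\psi\Rightarrow\vartheta$ / $\Gamma,\rho_1\mathrel{\Box\!\!\to}\sigma_1,\dots,\rho_n\mathrel{\Box\!\!\to}\sigma_n,\xi_1\mathrel{\Diamond\!\!\to}\chi_1,\dots,\xi_k\mathrel{\Diamond\!\!\to}\chi_k,\varphi\mathrel{\Diamond\!\!\to}\psi\Rightarrow\eta\mathrel{\Diamond\!\!\to}\vartheta$; $\Box\Diamond^{cem}$: $\{\varphi\Leftrightarrow\rho_i\}_{i\le n}$, $\{\varphi\Leftrightarrow\xi_j\}_{j\le k}$, $\sigma_1,\dots,\sigma_n,\chi_1,\dots,\chi_k,\psi\Rightarrow$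 / $\Gamma,\rho_1\mathrel{\Box\!\!\to}\sigma_1,\dots,\rho_n\mathrel{\Box\!\!\to}\sigma_n,\xi_1\mathrel{\Diamond\!\!\to}\chi_1,\dots,\xi_k\mathrel{\Diamond\!\!\to}\chi_k,\varphi\mathrel{\Diamond\!\!\to}\psi\Rightarrow\Delta$. Height of a derivation: length of its longest branch minus 1. A rule is admissible if its conclusion is derivable whenever its premisses are; height-preserving admissible if moreover the conclusion has a derivation of height at most the maximal height of the premisses' derivations. *)

(* plain lists + Permutation model finite multisets. *)
From Stdlib Require Export List Permutation.
Import ListNotations.

Inductive form : Type :=
| Var : nat -> form
| Bot : form
| And : form -> form -> form
| Or  : form -> form -> form
| Imp : form -> form -> form
| Box : form -> form -> form
| Dia : form -> form -> form.

Definition Neg (a : form) : form := Imp a Bot.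
Definition Top : form := Neg Bot.
Definition Iff (a b : form) : form := And (Imp a b) (Imp b a).

Inductive ConstCKCEM : form -> Prop :=
| A1 a b : ConstCKCEM (Imp a (Imp b a))
| A2 a b c : ConstCKCEM (Imp (Imp a (Imp b c)) (Imp (Imp a b) (Imp a c)))
| A3 a b : ConstCKCEM (Imp (And a b) a)
| A4 a b : ConstCKCEM (Imp (And a b) b)
| A5 a b : ConstCKCEM (Imp a (Imp b (And a b)))
| A6 a b : ConstCKCEM (Imp a (Or a b))
| A7 a b : ConstCKCEM (Imp b (Or a b))
| A8 a b c : ConstCKCEM (Imp (Imp a c) (Imp (Imp b c) (Imp (Or a b) c)))
| A9 a : ConstCKCEM (Imp Bot a)
| MP a b : ConstCKCEM (Imp a b) -> ConstCKCEM a -> ConstCKCEM b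
| CM_box a b c : ConstCKCEM (Imp (Box a (And b c)) (And (Box a b) (Box a c)))
| CC_box a b c : ConstCKCEM (Imp (And (Box a b) (Box a c)) (Box a (And b c)))
| CN_box a : ConstCKCEM (Box a Top)
| CN_dia a : ConstCKCEM (Neg (Dia a Bot))
| CK_dia a b c : ConstCKCEM (Imp (Box a (Imp b c)) (Imp (Dia a b) (Dia a c)))
| RA_box a r b : ConstCKCEM (Iff a r) -> ConstCKCEM (Iff (Box a b) (Box r b))
| RC_box a b c : ConstCKCEM (Iff b c) -> ConstCKCEM (Iff (Box a b) (Box a c))
| RA_dia a r b : ConstCKCEM (Iff a r) -> ConstCKCEM (Iff (Dia a b) (Dia r b))
| RC_dia a b c : ConstCKCEM (Iff b c) -> ConstCKCEM (Iff (Dia a b) (Dia a c))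
| CEM_dia a b c : ConstCKCEM (Imp (And (Dia a b) (Dia a c)) (Dia a (And b c))).

(** * Sequents: antecedent = list (read as multiset), succedent = option form
    (|Delta| <= 1). *)
Definition boxes (l : list (form * form)) : list form :=
  map (fun p => Box (fst p) (snd p)) l.
Definition dias (l : list (form * form)) : list form :=
  map (fun p => Dia (fst p) (snd p)) l.

(** [SC n G D] : the sequent G => D has an S.ConstCKCEM derivation of height
    at most n.  Leaves (init, bot_L) have height 0; a rule application has
    height 1 + the maximum of its premisses' heights. *)
Inductive SC : nat -> list form -> option form -> Prop :=
| SC_init n G Gm p :
    Permutation G (Var p :: Gm) -> SC n G (Some (Var p))
| SC_botL n G Gm D :
    Permutation G (Bot :: Gm) -> SC n G D
| SC_andL n G Gm a b D :
    Permutation G (And a b :: Gm) -> SC n (a :: b :: Gm) D -> SC (S n) G D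
| SC_andR n G a b :
    SC n G (Some a) -> SC n G (Some b) -> SC (S n) G (Some (And a b))
| SC_orL n G Gm a b D :
    Permutation G (Or a b :: Gm) ->
    SC n (a :: Gm) D -> SC n (b :: Gm) D -> SC (S n) G D
| SC_orR1 n G a b : SC n G (Some a) -> SC (S n) G (Some (Or a b))
| SC_orR2 n G a b : SC n G (Some b) -> SC (S n) G (Some (Or a b))
| SC_impR n G a b : SC n (a :: G) (Some b) -> SC (S n) G (Some (Imp a b))
| SC_impL n G Gm a b D :
    Permutation G (Imp a b :: Gm) ->
    SC n (Imp a b :: Gm) (Some a) -> SC n (b :: Gm) D -> SC (S n) G D
| SC_box n G Gm (l : list (form * form)) phi psi :
    Permutation G (Gm ++ boxes l) ->
    (forall rs, In rs l -> SC n [phi] (Some (fst rs))) ->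
    (forall rs, In rs l -> SC n [fst rs] (Some phi)) ->
    SC n (map snd l) (Some psi) ->
    SC (S n) G (Some (Box phi psi))
| SC_dia_cem n G Gm (l k : list (form * form)) phi psi eta theta :
    Permutation G (Gm ++ boxes l ++ dias k ++ [Dia phi psi]) ->
    (forall rs, In rs l -> SC n [phi] (Some (fst rs))) ->
    (forall rs, In rs l -> SC n [fst rs] (Some phi)) ->
    (forall xc, In xc k -> SC n [phi] (Some (fst xc))) ->
    (forall xc, In xc k -> SC n [fst xc] (Some phi)) ->
    SC n [phi] (Some eta) -> SC n [eta] (Some phi) ->
    SC n (map snd l ++ map snd k ++ [psi]) (Some theta) ->
    SC (S n) G (Some (Dia eta theta))
| SC_boxdia_cem n G Gm (l k : list (form * form)) phi psi D :
    Permutation G (Gm ++ boxes l ++ dias k ++ [Dia phi psi]) ->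
    (forall rs, In rs l -> SC n [phi] (Some (fst rs))) ->
    (forall rs, In rs l -> SC n [fst rs] (Some phi)) ->
    (forall xc, In xc k -> SC n [phi] (Some (fst xc))) ->
    (forall xc, In xc k -> SC n [fst xc] (Some phi)) ->
    SC n (map snd l ++ map snd k ++ [psi]) None ->
    SC (S n) G D.

Definition derivable (G : list form) (D : option form) : Prop :=
  exists n, SC n G D.

Fixpoint bigAnd (G : list form) : form :=
  match G with
  | [] => Top
  | [a] => a
  | a :: G' => And a (bigAnd G')
  end.

Definition bigOr (D : option form) : form :=
  match D with None => Bot | Some a => a end.

Definition iota (G : list form) (D : option form) : form :=
  match G with
  | [] => bigOr D
  | _ => Imp (bigAnd G) (bigOr D)
  end.

From Stdlib Require Import Lia Arith.
Import ListNotations.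

(* Height-preserving weakening and contraction are proved together, as closure of height-[n]
   derivability under any antecedent [G'] containing every formula of [G]: the left rules are
   height-preserving invertible, and a modal rule instance survives the removal of repeated
   modal formulas.

   Cut is eliminated by induction on a bound [s] on the sizes of all formulas of the two
   sequents, then on the size of the cut formula, then on the sum of the heights.  A principal
   modal cut merges the two modal rule instances into one: the consequents are joined by a cut
   on a subformula of the cut formula, and the antecedents are shown interderivable by cuts on
   antecedents of modal formulas of the context, which are smaller than [s].

   For soundness, a modal rule instance is simulated by collecting its boxes with CC (its
   diamonds with CEM) after aligning their antecedents with RA, and then applying the premiss
   under the box (through CK for diamonds).  Completeness derives every axiom and rule of
   ConstCKCEM, using cut for modus ponens and for inverting the rules RA and RC. *)

Fixpoint size (f : form) : nat :=
  match f with
  | Var _ | Bot => 1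
  | And a b | Or a b | Imp a b | Box a b | Dia a b => S (size a + size b)
  end.

Lemma size_pos f : 1 <= size f.
Proof. destruct f; simpl; lia. Qed.

Definition form_eq_dec (x y : form) : {x = y} + {x <> y}.
Proof. decide equality; apply Nat.eq_dec. Defined.

Definition form_pair_eq_dec (x y : form * form) : {x = y} + {x <> y}.
Proof. decide equality; apply form_eq_dec. Defined.

Section Permutations.
Context {A : Type}.

Lemma Permutation_cons_in (x : A) G G0 : Permutation G (x :: G0) -> In x G.
Proof. intro HP. apply (Permutation_in _ (Permutation_sym HP)). now left. Qed.

Lemma Permutation_cons_in_tail (x y : A) G G0 : Permutation G (x :: G0) -> In y G0 -> In y G.
Proof. intros HP Hy. apply (Permutation_in _ (Permutation_sym HP)). now right. Qed.

Lemma Permutation_app_in_r (x : A) G Gm M : Permutation G (Gm ++ M) -> In x M -> In x G.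
Proof. intros HP Hx. apply (Permutation_in _ (Permutation_sym HP)), in_or_app. now right. Qed.

Lemma in_Permutation_cons (x : A) G : In x G -> exists G0, Permutation G (x :: G0).
Proof.
  intro H. destruct (in_split _ _ H) as (G1 & G2 & ->).
  exists (G1 ++ G2). symmetry. apply Permutation_middle.
Qed.

Lemma Permutation_cons_cases (x y : A) l1 l2 :
  Permutation (x :: l1) (y :: l2) ->
  (x = y /\ Permutation l1 l2) \/
  (exists r, Permutation l1 (y :: r) /\ Permutation l2 (x :: r)).
Proof.
  intro H. destruct (Permutation_cons_in y (x :: l1) l2 H) as [<- | Hy].
  - left. split; [reflexivity | eapply Permutation_cons_inv; exact H].
  - right. destruct (in_split _ _ Hy) as (A1 & A2 & ->).
    exists (A1 ++ A2). split; [symmetry; apply Permutation_middle |].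
    apply Permutation_cons_inv with y. rewrite <- H, <- Permutation_middle. apply perm_swap.
Qed.

Lemma Permutation_cons_app_cases (x : A) l L R :
  Permutation (x :: l) (L ++ R) ->
  (exists L', Permutation L (x :: L') /\ Permutation l (L' ++ R)) \/
  (exists R', Permutation R (x :: R') /\ Permutation l (L ++ R')).
Proof.
  intro H. assert (Hx : In x (L ++ R)) by (eapply Permutation_in; [exact H | now left]).
  apply in_app_or in Hx as [Hx | Hx]; destruct (in_split _ _ Hx) as (A1 & A2 & ->).
  - left. exists (A1 ++ A2). split; [symmetry; apply Permutation_middle |].
    apply Permutation_cons_inv with x. rewrite H, <- app_assoc. simpl.
    rewrite <- Permutation_middle, app_assoc. reflexivity.
  - right. exists (A1 ++ A2). split; [symmetry; apply Permutation_middle |].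
    apply Permutation_cons_inv with x. rewrite H, <- Permutation_middle, app_assoc,
      <- Permutation_middle, app_assoc. reflexivity.
Qed.

Lemma NoDup_incl_Permutation (l m : list A) :
  NoDup l -> incl l m -> exists r, Permutation m (l ++ r).
Proof.
  revert m. induction l as [|x l IH]; intros m Hnd Hinc; [now exists m |].
  inversion Hnd as [|? ? Hx Hl]; subst.
  destruct (in_Permutation_cons x m (Hinc x (or_introl eq_refl))) as [m0 Hm0].
  destruct (IH m0 Hl) as [r Hr].
  - intros y Hy. destruct (Permutation_in _ Hm0 (Hinc y (or_intror Hy))) as [<- | ?]; easy.
  - exists r. rewrite Hm0. apply perm_skip. exact Hr.
Qed.

Lemma Permutation_cons_app_notin (x : A) G0 Gm M :
  Permutation (x :: G0) (Gm ++ M) -> ~ In x M ->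
  exists Gm', Permutation Gm (x :: Gm') /\ Permutation G0 (Gm' ++ M).
Proof.
  intros H Hn. destruct (Permutation_cons_app_cases _ _ _ _ H) as [? | (R' & H1 & _)]; [easy |].
  exfalso. exact (Hn (Permutation_cons_in _ _ _ H1)).
Qed.

Lemma Permutation_incl_cons_inv (x : A) G Gm G' :
  Permutation G (x :: Gm) -> incl G G' -> In x G' /\ incl Gm G'.
Proof.
  intros HP Hi. apply incl_cons_inv. intros y Hy. apply Hi.
  exact (Permutation_in _ (Permutation_sym HP) Hy).
Qed.

End Permutations.

Section PermutationSolver.
Context {A : Type}.

Lemma Permutation_pull_elt_cons (y x : A) T E :
  Permutation T (x :: E) -> Permutation (y :: T) (x :: y :: E).
Proof. intro H. rewrite H. apply perm_swap. Qed.
Lemma Permutation_pull_elt_app (B : list A) x T E :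
  Permutation T (x :: E) -> Permutation (B ++ T) (x :: B ++ E).
Proof. intro H. rewrite H. symmetry. apply Permutation_middle. Qed.
Lemma Permutation_pull_list_nil (B : list A) : Permutation B (B ++ []).
Proof. now rewrite app_nil_r. Qed.
Lemma Permutation_pull_list_cons (y : A) B T E :
  Permutation T (B ++ E) -> Permutation (y :: T) (B ++ y :: E).
Proof. intro H. rewrite H. apply Permutation_middle. Qed.
Lemma Permutation_pull_list_app (C B T E : list A) :
  Permutation T (B ++ E) -> Permutation (C ++ T) (B ++ C ++ E).
Proof. intro H. rewrite H, !app_assoc. apply Permutation_app_tail, Permutation_app_comm. Qed.
Lemma Permutation_match_elt (x : A) L R E :
  Permutation R (x :: E) -> Permutation L E -> Permutation (x :: L) R.
Proof. intros H1 H2. now rewrite H1, H2. Qed.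
Lemma Permutation_match_list (B L R E : list A) :
  Permutation R (B ++ E) -> Permutation L E -> Permutation (B ++ L) R.
Proof. intros H1 H2. now rewrite H1, H2. Qed.
Lemma Permutation_match_last (B R E : list A) :
  Permutation R (B ++ E) -> Permutation [] E -> Permutation B R.
Proof. intros H1 H2. now rewrite H1, <- H2, app_nil_r. Qed.

End PermutationSolver.

Ltac pull_elt :=
  match goal with
  | |- Permutation (?x :: ?T) (?x :: ?E) => apply Permutation_refl
  | |- Permutation (?y :: ?T) (?x :: ?E) => eapply Permutation_pull_elt_cons; pull_elt
  | |- Permutation (?B ++ ?T) (?x :: ?E) => eapply Permutation_pull_elt_app; pull_elt
  end.

Ltac pull_list :=
  match goal with
  | |- Permutation (?B ++ ?T) (?B ++ ?E) => apply Permutation_refl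
  | |- Permutation ?B (?B ++ ?E) => apply Permutation_pull_list_nil
  | |- Permutation (?y :: ?T) (?B ++ ?E) => eapply Permutation_pull_list_cons; pull_list
  | |- Permutation (?C ++ ?T) (?B ++ ?E) => eapply Permutation_pull_list_app; pull_list
  end.

Ltac psolve_flat :=
  match goal with
  | |- Permutation [] [] => apply perm_nil
  | |- Permutation (?x :: ?L) ?R => eapply Permutation_match_elt; [pull_elt | psolve_flat]
  | |- Permutation (?B ++ ?L) ?R => eapply Permutation_match_list; [pull_list | psolve_flat]
  | |- Permutation ?B ?R => eapply Permutation_match_last; [pull_list | psolve_flat]
  end.

(** [psolve] proves [Permutation L R] when, after flattening [++], both sides are built from the
    same elements and list variables; neither side may contain evars. *)
Ltac psolve := repeat progress (rewrite <- ?app_assoc; cbn [app]); rewrite ?app_nil_r; psolve_flat.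

Ltac incl_solve := let y := fresh in intros y; simpl; rewrite ?in_app_iff; simpl; tauto.

(** * Height-preserving structural rules *)

Lemma SC_perm n G D : SC n G D -> forall G', Permutation G G' -> SC n G' D.
Proof.
  induction 1; intros G'' HP.
  - eapply SC_init. rewrite <- HP. eassumption.
  - eapply SC_botL. rewrite <- HP. eassumption.
  - eapply SC_andL; [rewrite <- HP; eassumption | assumption].
  - apply SC_andR; auto.
  - eapply SC_orL; [rewrite <- HP; eassumption | assumption | assumption].
  - apply SC_orR1; auto.
  - apply SC_orR2; auto.
  - apply SC_impR. apply IHSC. apply perm_skip. exact HP.
  - eapply SC_impL; [rewrite <- HP; eassumption | assumption | assumption].
  - eapply SC_box; [rewrite <- HP; eassumption | assumption ..].
  - eapply SC_dia_cem; [rewrite <- HP; eassumption | assumption ..].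
  - eapply SC_boxdia_cem; [rewrite <- HP; eassumption | assumption ..].
Qed.

Lemma SC_mono n G D : SC n G D -> forall m, n <= m -> SC m G D.
Proof.
  induction 1 as [| | | | | | | | | n G Gm l phi psi HP C1 IC1 C2 IC2 P IP
    | n G Gm l k phi psi eta theta HP C1 IC1 C2 IC2 C3 IC3 C4 IC4 E1 IE1 E2 IE2 P IP
    | n G Gm l k phi psi D HP C1 IC1 C2 IC2 C3 IC3 C4 IC4 P IP];
    intros m Hm; try (destruct m as [|m]; [lia |]).
  - eapply SC_init; eassumption.
  - eapply SC_botL; eassumption.
  - eapply SC_andL; [eassumption | auto with arith].
  - apply SC_andR; auto with arith.
  - eapply SC_orL; [eassumption | auto with arith | auto with arith].
  - apply SC_orR1; auto with arith.
  - apply SC_orR2; auto with arith.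
  - apply SC_impR; auto with arith.
  - eapply SC_impL; [eassumption | auto with arith | auto with arith].
  - eapply SC_box; [eassumption | intros rs Hrs; apply IC1 | intros rs Hrs; apply IC2 | apply IP];
      auto with arith.
  - eapply SC_dia_cem; [eassumption | intros rs Hrs; apply IC1 | intros rs Hrs; apply IC2
      | intros rs Hrs; apply IC3 | intros rs Hrs; apply IC4 | apply IE1 | apply IE2 | apply IP];
      auto with arith.
  - eapply SC_boxdia_cem; [eassumption | intros rs Hrs; apply IC1 | intros rs Hrs; apply IC2
      | intros rs Hrs; apply IC3 | intros rs Hrs; apply IC4 | apply IP]; auto with arith.
Qed.

Lemma SC_init_in n G p : In (Var p) G -> SC n G (Some (Var p)).
Proof. intro H. destruct (in_Permutation_cons _ _ H) as [G0 HG0]. eapply SC_init; eassumption. Qed.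

Lemma SC_botL_in n G D : In Bot G -> SC n G D.
Proof. intro H. destruct (in_Permutation_cons _ _ H) as [G0 HG0]. eapply SC_botL; eassumption. Qed.

Lemma in_boxes x l : In x (boxes l) -> exists a b, x = Box a b /\ In (a, b) l.
Proof. intro H. apply in_map_iff in H as [[a b] [<- H]]. now exists a, b. Qed.

Lemma in_dias x l : In x (dias l) -> exists a b, x = Dia a b /\ In (a, b) l.
Proof. intro H. apply in_map_iff in H as [[a b] [<- H]]. now exists a, b. Qed.

Lemma in_boxes_intro rs l : In rs l -> In (Box (fst rs) (snd rs)) (boxes l).
Proof. apply (in_map (fun p => Box (fst p) (snd p))). Qed.

Lemma in_dias_intro rs l : In rs l -> In (Dia (fst rs) (snd rs)) (dias l).
Proof. apply (in_map (fun p => Dia (fst p) (snd p))). Qed.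

Lemma boxes_app l1 l2 : boxes (l1 ++ l2) = boxes l1 ++ boxes l2.
Proof. apply map_app. Qed.

Lemma dias_app l1 l2 : dias (l1 ++ l2) = dias l1 ++ dias l2.
Proof. apply map_app. Qed.

Definition propositional_compound (c : form) : Prop :=
  match c with And _ _ | Or _ _ | Imp _ _ => True | _ => False end.

Lemma propositional_notin_boxes c l : propositional_compound c -> ~ In c (boxes l).
Proof. intros Hc H. apply in_boxes in H as (? & ? & -> & _). exact Hc. Qed.

Lemma propositional_notin_modal c l k phi psi :
  propositional_compound c -> ~ In c (boxes l ++ dias k ++ [Dia phi psi]).
Proof.
  intros Hc H. rewrite !in_app_iff in H. destruct H as [H | [H | [<- | []]]]; [| | exact Hc].
  - exact (propositional_notin_boxes c l Hc H).
  - apply in_dias in H as (? & ? & -> & _). exact Hc.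
Qed.

Definition left_premisses (n : nat) (c : form) (Gm : list form) (D : option form) : Prop :=
  match c with
  | And a b => SC n (a :: b :: Gm) D
  | Or a b => SC n (a :: Gm) D /\ SC n (b :: Gm) D
  | Imp a b => SC n (Imp a b :: Gm) (Some a) /\ SC n (b :: Gm) D
  | _ => False
  end.

Lemma SC_left_inv c rep : propositional_compound c ->
  (forall n Gm D, left_premisses n c Gm D -> SC n (rep ++ Gm) D) ->
  forall n G D, SC n G D -> forall G0, Permutation G (c :: G0) -> SC n (rep ++ G0) D.
Proof.
  intros Hc Hprinc. induction 1 as [n G Gm p HP | n G Gm D HP | n G Gm a b D HP P IH
    | n G a b P1 IH1 P2 IH2 | n G Gm a b D HP P1 IH1 P2 IH2 | n G a b P IH | n G a b P IH
    | n G a b P IH | n G Gm a b D HP P1 IH1 P2 IH2 | n G Gm l phi psi HP C1 C2 P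
    | n G Gm l k phi psi eta theta HP C1 C2 C3 C4 E1 E2 P | n G Gm l k phi psi D HP C1 C2 C3 C4 P];
    intros G0 HG0; try pose proof (Permutation_trans (Permutation_sym HG0) HP) as HcG.
  - apply SC_init_in, in_or_app. right.
    destruct (Permutation_in _ HG0 (Permutation_cons_in _ _ _ HP)) as [-> | ?];
      [destruct Hc | easy].
  - apply SC_botL_in, in_or_app. right.
    destruct (Permutation_in _ HG0 (Permutation_cons_in _ _ _ HP)) as [-> | ?];
      [destruct Hc | easy].
  - destruct (Permutation_cons_cases _ _ _ _ HcG) as [[-> Hp] | (r & Hr2 & Hr1)].
    + apply SC_mono with n; [| lia].
      eapply SC_perm; [apply (Hprinc n Gm D); exact P | now rewrite Hp].
    + eapply SC_andL with (Gm := rep ++ r) (a := a) (b := b); [rewrite Hr2; psolve |].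
      eapply SC_perm; [apply (IH (a :: b :: r)); rewrite Hr1; psolve | psolve].
  - apply SC_andR; auto.
  - destruct (Permutation_cons_cases _ _ _ _ HcG) as [[-> Hp] | (r & Hr2 & Hr1)].
    + apply SC_mono with n; [| lia].
      eapply SC_perm; [apply (Hprinc n Gm D); split; assumption | now rewrite Hp].
    + eapply SC_orL with (Gm := rep ++ r) (a := a) (b := b); [rewrite Hr2; psolve | |].
      * eapply SC_perm; [apply (IH1 (a :: r)); rewrite Hr1; psolve | psolve].
      * eapply SC_perm; [apply (IH2 (b :: r)); rewrite Hr1; psolve | psolve].
  - apply SC_orR1; auto.
  - apply SC_orR2; auto.
  - apply SC_impR. eapply SC_perm; [apply (IH (a :: G0)); rewrite HG0; psolve | psolve].
  - destruct (Permutation_cons_cases _ _ _ _ HcG) as [[-> Hp] | (r & Hr2 & Hr1)].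
    + apply SC_mono with n; [| lia].
      eapply SC_perm; [apply (Hprinc n Gm D); split; assumption | now rewrite Hp].
    + eapply SC_impL with (Gm := rep ++ r) (a := a) (b := b); [rewrite Hr2; psolve | |].
      * eapply SC_perm; [apply (IH1 (Imp a b :: r)); rewrite Hr1; psolve | psolve].
      * eapply SC_perm; [apply (IH2 (b :: r)); rewrite Hr1; psolve | psolve].
  - destruct (Permutation_cons_app_notin _ _ _ _ HcG (propositional_notin_boxes c l Hc))
      as (Gm' & _ & HGm').
    eapply SC_box with (Gm := rep ++ Gm') (l := l); [rewrite HGm'; psolve | assumption ..].
  - destruct (Permutation_cons_app_notin _ _ _ _ HcG (propositional_notin_modal c l k phi psi Hc))
      as (Gm' & _ & HGm').
    eapply SC_dia_cem with (Gm := rep ++ Gm') (l := l) (k := k) (phi := phi) (psi := psi);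
      [rewrite HGm'; psolve | assumption ..].
  - destruct (Permutation_cons_app_notin _ _ _ _ HcG (propositional_notin_modal c l k phi psi Hc))
      as (Gm' & _ & HGm').
    eapply SC_boxdia_cem with (Gm := rep ++ Gm') (l := l) (k := k) (phi := phi) (psi := psi);
      [rewrite HGm'; psolve | assumption ..].
Qed.

Lemma SC_andL_inv n a b G0 D : SC n (And a b :: G0) D -> SC n (a :: b :: G0) D.
Proof.
  intro H. now apply (SC_left_inv (And a b) [a; b] I (fun _ _ _ P => P) n _ D H).
Qed.

Lemma SC_orL_inv_l n a b G0 D : SC n (Or a b :: G0) D -> SC n (a :: G0) D.
Proof.
  intro H. now apply (SC_left_inv (Or a b) [a] I (fun _ _ _ P => proj1 P) n _ D H).
Qed.

Lemma SC_orL_inv_r n a b G0 D : SC n (Or a b :: G0) D -> SC n (b :: G0) D.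
Proof.
  intro H. now apply (SC_left_inv (Or a b) [b] I (fun _ _ _ P => proj2 P) n _ D H).
Qed.

Lemma SC_impL_inv n a b G0 D : SC n (Imp a b :: G0) D -> SC n (b :: G0) D.
Proof.
  intro H. now apply (SC_left_inv (Imp a b) [b] I (fun _ _ _ P => proj2 P) n _ D H).
Qed.

Lemma boxes_NoDup l : NoDup l -> NoDup (boxes l).
Proof.
  apply FinFun.Injective_map_NoDup. intros [a b] [c d] H. now injection H as -> ->.
Qed.

Lemma dias_NoDup l : NoDup l -> NoDup (dias l).
Proof.
  apply FinFun.Injective_map_NoDup. intros [a b] [c d] H. now injection H as -> ->.
Qed.

Lemma incl_box_context G G' Gm l :
  Permutation G (Gm ++ boxes l) -> incl G G' ->
  exists l2 r, Permutation G' (r ++ boxes l2) /\ incl l2 l /\ incl (map snd l) (map snd l2).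
Proof.
  intros HP Hinc. set (l2 := nodup form_pair_eq_dec l).
  assert (Hl2 : forall p, In p l2 <-> In p l) by (intro; apply nodup_In).
  destruct (NoDup_incl_Permutation (boxes l2) G') as [r Hr].
  - apply boxes_NoDup, NoDup_nodup.
  - intros y Hy. apply Hinc. eapply Permutation_app_in_r; [exact HP |].
    apply (incl_map _ (fun p => proj1 (Hl2 p))), Hy.
  - exists l2, r. split; [rewrite Hr; apply Permutation_app_comm |].
    split; [intros p Hp; now apply Hl2 |].
    apply incl_map. intros p Hp. now apply Hl2.
Qed.

Lemma incl_dia_context G G' Gm l k phi psi :
  Permutation G (Gm ++ boxes l ++ dias k ++ [Dia phi psi]) -> incl G G' ->
  exists l2 k2 r, Permutation G' (r ++ boxes l2 ++ dias k2 ++ [Dia phi psi]) /\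
    incl l2 l /\ incl k2 k /\
    incl (map snd l ++ map snd k ++ [psi]) (map snd l2 ++ map snd k2 ++ [psi]).
Proof.
  intros HP Hinc. set (l2 := nodup form_pair_eq_dec l).
  set (k2 := nodup form_pair_eq_dec
               (filter (fun p => if form_pair_eq_dec p (phi, psi) then false else true) k)).
  assert (Hl2 : forall p, In p l2 <-> In p l) by (intro; apply nodup_In).
  assert (Hk2 : forall p, In p k2 <-> In p k /\ p <> (phi, psi)).
  { intro p. unfold k2. rewrite nodup_In, filter_In.
    destruct (form_pair_eq_dec p (phi, psi)); split; intros [? ?]; try congruence; auto. }
  destruct (NoDup_incl_Permutation (boxes l2 ++ dias k2 ++ [Dia phi psi]) G') as [r Hr].
  - apply NoDup_app; [apply boxes_NoDup, NoDup_nodup | apply NoDup_app |].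
    + apply dias_NoDup, NoDup_nodup.
    + repeat constructor. easy.
    + intros y Hy [<- | []]. apply in_dias in Hy as (a & b & Heq & Hab). injection Heq as -> ->.
      now apply Hk2 in Hab as [_ Hab].
    + intros y Hy1 Hy2. apply in_boxes in Hy1 as (a & b & -> & _).
      apply in_app_or in Hy2 as [Hy2 | [Hy2 | []]];
        [apply in_dias in Hy2 as (? & ? & Heq & _) |]; discriminate.
  - intros y Hy. apply Hinc. eapply Permutation_app_in_r; [exact HP |].
    rewrite !in_app_iff in Hy |- *.
    destruct Hy as [Hy | [Hy | Hy]]; [left | right; left | now right; right].
    + apply (incl_map _ (fun p => proj1 (Hl2 p))), Hy.
    + apply (incl_map _ (fun p Hp => proj1 (proj1 (Hk2 p) Hp))), Hy.
  - exists l2, k2, r. split; [rewrite Hr; apply Permutation_app_comm |].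
    split; [intros p Hp; now apply Hl2 |]. split; [intros p Hp; now apply Hk2 |].
    intros y Hy. rewrite !in_app_iff in Hy |- *.
    destruct Hy as [Hy | [Hy | Hy]]; [left | | now right; right].
    + apply in_map_iff in Hy as [p [<- Hp]]. apply in_map. now apply Hl2.
    + apply in_map_iff in Hy as [p [<- Hp]].
      destruct (form_pair_eq_dec p (phi, psi)) as [-> | Hne]; [now right; right; left |].
      right; left. apply in_map. now apply Hk2.
Qed.

Lemma SC_incl n G D G' : SC n G D -> incl G G' -> SC n G' D.
Proof.
  revert n G D G'.
  enough (H : forall N n G D, SC n G D -> n <= N -> forall G', incl G G' -> SC n G' D)
    by (intros n G D G' HS; now apply (H n)).
  induction N as [|N IHN]; intros n G D H HnN G' Hinc; destruct H as
    [n G Gm p HP | n G Gm D HP | n G Gm a b D HP P | n G a b P1 P2 | n G Gm a b D HP P1 P2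
    | n G a b P | n G a b P | n G a b P | n G Gm a b D HP P1 P2 | n G Gm l phi psi HP C1 C2 P
    | n G Gm l k phi psi eta theta HP C1 C2 C3 C4 E1 E2 P | n G Gm l k phi psi D HP C1 C2 C3 C4 P];
    try (exfalso; lia); try (assert (HnN' : n <= N) by lia);
    try (destruct (Permutation_incl_cons_inv _ _ _ _ HP Hinc) as [Hin HGm];
         destruct (in_Permutation_cons _ _ Hin) as [G0 HG0]).
  1,3: apply SC_init_in, Hinc; exact (Permutation_cons_in _ _ _ HP).
  1,2: apply SC_botL_in, Hinc; exact (Permutation_cons_in _ _ _ HP).
  - assert (Hw : SC n (a :: b :: G') D)
      by exact (IHN n _ _ P HnN' _ (incl_app_app (incl_refl [a; b]) HGm)).
    assert (Hi : SC n (a :: b :: a :: b :: G0) D)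
      by (apply SC_andL_inv; eapply SC_perm; [exact Hw | rewrite HG0; psolve]).
    eapply SC_andL; [exact HG0 | apply (IHN n _ _ Hi HnN'); incl_solve].
  - apply SC_andR; eapply IHN; eauto.
  - assert (Hw1 : SC n (a :: G') D)
      by exact (IHN n _ _ P1 HnN' _ (incl_app_app (incl_refl [a]) HGm)).
    assert (Hw2 : SC n (b :: G') D)
      by exact (IHN n _ _ P2 HnN' _ (incl_app_app (incl_refl [b]) HGm)).
    assert (Hi1 : SC n (a :: a :: G0) D)
      by (apply SC_orL_inv_l with (b := b); eapply SC_perm; [exact Hw1 | rewrite HG0; psolve]).
    assert (Hi2 : SC n (b :: b :: G0) D)
      by (apply SC_orL_inv_r with (a := a); eapply SC_perm; [exact Hw2 | rewrite HG0; psolve]).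
    eapply SC_orL; [exact HG0 | apply (IHN n _ _ Hi1 HnN'); incl_solve
      | apply (IHN n _ _ Hi2 HnN'); incl_solve].
  - apply SC_orR1; eapply IHN; eauto.
  - apply SC_orR2; eapply IHN; eauto.
  - apply SC_impR. eapply IHN; eauto. intros y [<- | Hy]; simpl; auto.
  - assert (Hw1 : SC n (Imp a b :: G0) (Some a)).
    { eapply SC_perm; [| exact HG0].
      exact (IHN n _ _ P1 HnN' _ (incl_cons (Permutation_cons_in _ _ _ HG0) HGm)). }
    assert (Hw2 : SC n (b :: G') D)
      by exact (IHN n _ _ P2 HnN' _ (incl_app_app (incl_refl [b]) HGm)).
    assert (Hi2 : SC n (b :: b :: G0) D)
      by (apply SC_impL_inv with (a := a); eapply SC_perm; [exact Hw2 | rewrite HG0; psolve]).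
    eapply SC_impL; [exact HG0 | exact Hw1 | apply (IHN n _ _ Hi2 HnN'); incl_solve].
  - destruct (incl_box_context _ _ _ _ HP Hinc) as (l2 & r & HP' & Hl & Hs).
    eapply SC_box; [exact HP' | intros rs Hrs; auto .. | eapply IHN; eauto].
  - destruct (incl_dia_context _ _ _ _ _ _ _ HP Hinc) as (l2 & k2 & r & HP' & Hl & Hk & Hs).
    eapply SC_dia_cem; [exact HP' | intros rs Hrs; auto .. | assumption | assumption
      | eapply IHN; eauto].
  - destruct (incl_dia_context _ _ _ _ _ _ _ HP Hinc) as (l2 & k2 & r & HP' & Hl & Hk & Hs).
    eapply SC_boxdia_cem; [exact HP' | intros rs Hrs; auto .. | eapply IHN; eauto].
Qed.

Lemma SC_weaken_right n G phi : SC n G None -> SC n G (Some phi).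
Proof.
  remember None as D eqn:HD. intro H. revert phi.
  induction H; intro phi'; try discriminate.
  - eapply SC_botL; eauto.
  - eapply SC_andL; eauto.
  - eapply SC_orL; eauto.
  - eapply SC_impL; eauto.
  - eapply SC_boxdia_cem; eauto.
Qed.

Lemma der_perm G G' D : derivable G D -> Permutation G G' -> derivable G' D.
Proof. intros [n H] HP. exists n. eapply SC_perm; eauto. Qed.

Lemma der_incl G G' D : derivable G D -> incl G G' -> derivable G' D.
Proof. intros [n H] HP. exists n. eapply SC_incl; eauto. Qed.

Lemma der_common_height G1 D1 G2 D2 : derivable G1 D1 -> derivable G2 D2 ->
  exists n, SC n G1 D1 /\ SC n G2 D2.
Proof. intros [n1 H1] [n2 H2]. exists (n1 + n2). split; eapply SC_mono; eauto; lia. Qed.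

Lemma uniform_bound {X} (l : list X) (P : X -> nat -> Prop) :
  (forall x n m, P x n -> n <= m -> P x m) -> (forall x, In x l -> exists n, P x n) ->
  exists n, forall x, In x l -> P x n.
Proof.
  intros Hm. induction l as [|x l IH]; intros H; [now exists 0 |].
  destruct (H x (or_introl eq_refl)) as [n1 H1].
  destruct IH as [n2 H2]; [intros; apply H; now right |].
  exists (n1 + n2). intros y [<- | Hy]; eapply Hm; eauto; lia.
Qed.

Lemma der_init G p : In (Var p) G -> derivable G (Some (Var p)).
Proof. intro H. exists 0. now apply SC_init_in. Qed.

Lemma der_botL G D : In Bot G -> derivable G D.
Proof. intro H. exists 0. now apply SC_botL_in. Qed.

Lemma der_andL G Gm a b D :
  Permutation G (And a b :: Gm) -> derivable (a :: b :: Gm) D -> derivable G D.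
Proof. intros HP [n H]. exists (S n). eapply SC_andL; eauto. Qed.

Lemma der_andR G a b : derivable G (Some a) -> derivable G (Some b) -> derivable G (Some (And a b)).
Proof.
  intros H1 H2. destruct (der_common_height _ _ _ _ H1 H2) as (n & ? & ?).
  exists (S n). now apply SC_andR.
Qed.

Lemma der_orL G Gm a b D : Permutation G (Or a b :: Gm) ->
  derivable (a :: Gm) D -> derivable (b :: Gm) D -> derivable G D.
Proof.
  intros HP H1 H2. destruct (der_common_height _ _ _ _ H1 H2) as (n & ? & ?).
  exists (S n). eapply SC_orL; eauto.
Qed.

Lemma der_orR1 G a b : derivable G (Some a) -> derivable G (Some (Or a b)).
Proof. intros [n H]. exists (S n). now apply SC_orR1. Qed.

Lemma der_orR2 G a b : derivable G (Some b) -> derivable G (Some (Or a b)).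
Proof. intros [n H]. exists (S n). now apply SC_orR2. Qed.

Lemma der_impR G a b : derivable (a :: G) (Some b) -> derivable G (Some (Imp a b)).
Proof. intros [n H]. exists (S n). now apply SC_impR. Qed.

Lemma der_impL G Gm a b D : Permutation G (Imp a b :: Gm) ->
  derivable (Imp a b :: Gm) (Some a) -> derivable (b :: Gm) D -> derivable G D.
Proof.
  intros HP H1 H2. destruct (der_common_height _ _ _ _ H1 H2) as (n & ? & ?).
  exists (S n). eapply SC_impL; eauto.
Qed.

Definition equiv (a b : form) : Prop := derivable [a] (Some b) /\ derivable [b] (Some a).

Definition equiv_all (phi : form) (l : list (form * form)) : Prop :=
  forall rs, In rs l -> equiv phi (fst rs).

(** The last premiss of the two diamond rules, merged: either [S => theta] for a conclusion
    [eta <>-> theta] with [eta] equivalent to [phi], or [S =>] for an arbitrary conclusion. *)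
Definition dia_goal (phi : form) (S : list form) (D : option form) : Prop :=
  (exists eta theta, D = Some (Dia eta theta) /\ equiv phi eta /\ derivable S (Some theta))
  \/ derivable S None.

Lemma equiv_all_app phi l1 l2 : equiv_all phi l1 -> equiv_all phi l2 -> equiv_all phi (l1 ++ l2).
Proof. intros H1 H2 rs Hrs. apply in_app_or in Hrs as [? | ?]; auto. Qed.

Lemma equiv_all_tl phi x l : equiv_all phi (x :: l) -> equiv_all phi l.
Proof. intros H rs Hrs. apply H. now right. Qed.

Lemma equiv_all_perm phi l l' : equiv_all phi l -> Permutation l l' -> equiv_all phi l'.
Proof. intros H HP rs Hrs. apply H. now apply (Permutation_in _ (Permutation_sym HP)). Qed.

Lemma equiv_all_height phi l : equiv_all phi l ->
  exists n, forall rs, In rs l -> SC n [phi] (Some (fst rs)) /\ SC n [fst rs] (Some phi).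
Proof.
  intro H.
  apply (uniform_bound l (fun rs n => SC n [phi] (Some (fst rs)) /\ SC n [fst rs] (Some phi))).
  - intros x n m [? ?] ?. split; eapply SC_mono; eauto.
  - intros x Hx. destruct (H x Hx) as [H1 H2].
    destruct (der_common_height _ _ _ _ H1 H2) as (n & ? & ?).
    now exists n.
Qed.

Lemma SC_equiv_all n phi l :
  (forall rs, In rs l -> SC n [phi] (Some (fst rs))) ->
  (forall rs, In rs l -> SC n [fst rs] (Some phi)) -> equiv_all phi l.
Proof. intros H1 H2 rs Hrs. split; exists n; auto. Qed.

Lemma dia_goal_perm phi S S' D : dia_goal phi S D -> Permutation S S' -> dia_goal phi S' D.
Proof.
  intros [(eta & theta & -> & H1 & H2) | H] HP; [left | right].
  - exists eta, theta. split; [reflexivity | split; [exact H1 | eapply der_perm; eauto]].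
  - eapply der_perm; eauto.
Qed.

Lemma der_box G Gm l phi psi : Permutation G (Gm ++ boxes l) -> equiv_all phi l ->
  derivable (map snd l) (Some psi) -> derivable G (Some (Box phi psi)).
Proof.
  intros HP HE [n2 H2]. destruct (equiv_all_height _ _ HE) as [n1 H1].
  exists (S (n1 + n2)). eapply SC_box; [exact HP | | | eapply SC_mono; [exact H2 | lia]];
    intros rs Hrs; destruct (H1 rs Hrs); eapply SC_mono; eauto; lia.
Qed.

Lemma der_dia G Gm l k phi psi D : Permutation G (Gm ++ boxes l ++ dias k ++ [Dia phi psi]) ->
  equiv_all phi l -> equiv_all phi k -> dia_goal phi (map snd l ++ map snd k ++ [psi]) D ->
  derivable G D.
Proof.
  intros HP Hl Hk HD.
  destruct (equiv_all_height _ _ Hl) as [n1 H1], (equiv_all_height _ _ Hk) as [n2 H2].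
  destruct HD as [(eta & theta & -> & [[m1 E1] [m2 E2]] & [m3 E3]) | [m3 E3]].
  - exists (S (n1 + n2 + m1 + m2 + m3)). eapply SC_dia_cem; [exact HP | | | | | | |].
    all: try (intros rs Hrs; first [destruct (H1 rs Hrs) | destruct (H2 rs Hrs)]; eapply SC_mono;
      eauto; lia).
    all: eapply SC_mono; eauto; lia.
  - exists (S (n1 + n2 + m3)). eapply SC_boxdia_cem; [exact HP | | | | |].
    all: try (intros rs Hrs; first [destruct (H1 rs Hrs) | destruct (H2 rs Hrs)]; eapply SC_mono;
      eauto; lia).
    all: eapply SC_mono; eauto; lia.
Qed.

Lemma der_id A G : derivable (A :: G) (Some A).
Proof.
  revert G. induction A as [p | | a IHa b IHb | a IHa b IHb | a IHa b IHb | a IHa b IHb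
    | a IHa b IHb];
    intro G.
  - apply der_init. now left.
  - apply der_botL. now left.
  - eapply der_andL with (Gm := G) (a := a) (b := b); [reflexivity |]. apply der_andR;
      [apply IHa |].
    eapply der_perm; [apply (IHb (a :: G)) | psolve].
  - eapply der_orL with (Gm := G) (a := a) (b := b); [reflexivity | apply der_orR1, IHa
      | apply der_orR2, IHb].
  - apply der_impR. eapply der_impL with (Gm := a :: G) (a := a) (b := b); [psolve | | apply IHb].
    eapply der_perm; [apply (IHa (Imp a b :: G)) | psolve].
  - eapply der_box with (Gm := G) (l := [(a, b)]); [simpl; psolve | | apply IHb].
    intros rs [<- | []]. split; apply IHa.
  - eapply der_dia with (Gm := G) (l := []) (k := []) (phi := a) (psi := b);
      [simpl; psolve | easy | easy |].
    left. exists a, b. split; [reflexivity |]. split; [split; apply IHa | apply IHb].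
Qed.

Lemma der_in A G : In A G -> derivable G (Some A).
Proof.
  intro H. destruct (in_Permutation_cons _ _ H) as [G0 HG0].
  eapply der_perm; [apply der_id | symmetry; exact HG0].
Qed.

Lemma equiv_refl a : equiv a a.
Proof. split; apply der_id. Qed.

Lemma equiv_sym a b : equiv a b -> equiv b a.
Proof. intros [? ?]. now split. Qed.

(** * Cut *)

Definition bounded (s : nat) (G : list form) : Prop := Forall (fun x => size x <= s) G.

Definition osize (D : option form) : nat := match D with None => 0 | Some x => size x end.

Ltac bounded_split H := unfold bounded in H; repeat rewrite ?Forall_app, ?Forall_cons_iff in H.

Ltac bounded_solve :=
  unfold bounded in *; simpl in *;
  repeat first [apply Forall_nil | apply Forall_cons | apply Forall_app; split];
  simpl in *; first [assumption | lia].

Lemma bounded_perm s G G' : bounded s G -> Permutation G G' -> bounded s G'.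
Proof. intros H HP. unfold bounded in *. now rewrite <- HP. Qed.

Lemma bounded_boxes s l :
  bounded s (boxes l) -> bounded (s - 1) (map fst l) /\ bounded (s - 1) (map snd l).
Proof.
  unfold bounded, boxes. rewrite !Forall_map. intro H.
  split; (eapply Forall_impl; [| exact H]); simpl; lia.
Qed.

Lemma bounded_dias s l :
  bounded s (dias l) -> bounded (s - 1) (map fst l) /\ bounded (s - 1) (map snd l).
Proof.
  unfold bounded, dias. rewrite !Forall_map. intro H.
  split; (eapply Forall_impl; [| exact H]); simpl; lia.
Qed.

Definition cut_at (s : nat) (c : form) : Prop := forall G G' D,
  bounded s G -> bounded s G' -> osize D <= s ->
  derivable G (Some c) -> derivable (c :: G') D -> derivable (G ++ G') D.

(** [c] is principal in the last rule of a derivation of [c :: G' => D], whose premisses are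
    recorded; in the [Imp] case the premiss [Imp a b :: G' => a] has already been cut against
    [G => Imp a b]. *)
Inductive left_principal (G : list form) : form -> list form -> option form -> Prop :=
| lp_and a b G' D :
    derivable (a :: b :: G') D -> left_principal G (And a b) G' D
| lp_or a b G' D :
    derivable (a :: G') D -> derivable (b :: G') D -> left_principal G (Or a b) G' D
| lp_imp a b G' D :
    derivable (G ++ G') (Some a) -> derivable (b :: G') D -> left_principal G (Imp a b) G' D
| lp_box_box x y G' Gm l phi psi :
    Permutation G' (Gm ++ boxes l) -> equiv_all phi ((x, y) :: l) ->
    derivable (y :: map snd l) (Some psi) -> left_principal G (Box x y) G' (Some (Box phi psi))
| lp_box_dia x y G' Gm l k phi psi D :
    Permutation G' (Gm ++ boxes l ++ dias k ++ [Dia phi psi]) ->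
    equiv_all phi ((x, y) :: l) -> equiv_all phi k ->
    dia_goal phi (y :: map snd l ++ map snd k ++ [psi]) D -> left_principal G (Box x y) G' D
| lp_dia_side x y G' Gm l k phi psi D :
    Permutation G' (Gm ++ boxes l ++ dias k ++ [Dia phi psi]) ->
    equiv_all phi l -> equiv_all phi ((x, y) :: k) ->
    dia_goal phi (y :: map snd l ++ map snd k ++ [psi]) D -> left_principal G (Dia x y) G' D
| lp_dia_main x y G' Gm l k D :
    Permutation G' (Gm ++ boxes l ++ dias k) -> equiv_all x l -> equiv_all x k ->
    dia_goal x (y :: map snd l ++ map snd k) D -> left_principal G (Dia x y) G' D.

Section PropositionalReductions.
Variables (s : nat) (G G' : list form) (D : option form).
Hypotheses (HG : bounded s G) (HG' : bounded s G') (HD : osize D <= s).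

Lemma cut_and_principal a b : cut_at s a -> cut_at s b -> size (And a b) <= s ->
  derivable G (Some a) -> derivable G (Some b) -> left_principal G (And a b) G' D ->
  derivable (G ++ G') D.
Proof.
  intros Ca Cb Hs Ha Hb Hlp. inversion Hlp as [? ? ? ? Hab | | | | | |]; subst.
  assert (H1 : derivable (G ++ b :: G') D) by (apply Ca; auto; bounded_solve).
  assert (H2 : derivable (G ++ G ++ G') D).
  { apply Cb; [assumption | bounded_solve | assumption | assumption |].
    eapply der_perm; [exact H1 | psolve]. }
  eapply der_incl; [exact H2 | incl_solve].
Qed.

Lemma cut_or_principal a b : cut_at s a -> cut_at s b -> size (Or a b) <= s ->
  derivable G (Some a) \/ derivable G (Some b) -> left_principal G (Or a b) G' D ->
  derivable (G ++ G') D.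
Proof.
  intros Ca Cb Hs Hab Hlp. inversion Hlp as [| ? ? ? ? Ha' Hb' | | | | |]; subst.
  destruct Hab as [Ha | Hb]; [apply Ca | apply Cb]; auto; bounded_solve.
Qed.

Lemma cut_imp_principal a b : cut_at s a -> cut_at s b -> size (Imp a b) <= s ->
  derivable (a :: G) (Some b) -> left_principal G (Imp a b) G' D -> derivable (G ++ G') D.
Proof.
  intros Ca Cb Hs Hab Hlp. inversion Hlp as [| | ? ? ? ? Ha Hb | | | |]; subst.
  assert (H1 : derivable ((G ++ G') ++ G) (Some b)) by (apply Ca; auto; bounded_solve).
  assert (H2 : derivable (((G ++ G') ++ G) ++ G') D) by (apply Cb; auto; bounded_solve).
  eapply der_incl; [exact H2 | incl_solve].
Qed.

End PropositionalReductions.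

Section ModalReductions.
Variable s : nat.
Hypothesis cut_below : forall c, size c <= s - 1 -> cut_at (s - 1) c.

Lemma equiv_trans_below x y z : size x < s -> size y < s -> size z < s ->
  equiv x y -> equiv y z -> equiv x z.
Proof.
  intros Hx Hy Hz [Hxy Hyx] [Hyz Hzy].
  split; [apply (cut_below y ltac:(lia) [x] [] (Some z))
    | apply (cut_below y ltac:(lia) [z] [] (Some x))]; simpl; auto; bounded_solve.
Qed.

Lemma equiv_all_trans_below phi phi' l : size phi < s -> size phi' < s ->
  bounded (s - 1) (map fst l) -> equiv phi phi' -> equiv_all phi' l -> equiv_all phi l.
Proof.
  intros H1 H2 Hl E El rs Hrs. apply equiv_trans_below with phi'; auto.
  unfold bounded in Hl. rewrite Forall_forall in Hl.
  specialize (Hl (fst rs) (in_map _ _ _ Hrs)). lia.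
Qed.

Lemma dia_goal_cut_below phi S S' y D : size y < s -> bounded (s - 1) S -> bounded (s - 1) S' ->
  osize D <= s -> derivable S (Some y) -> dia_goal phi (y :: S') D -> dia_goal phi (S ++ S') D.
Proof.
  intros Hy HS HS' HD Hd [(eta & theta & -> & E & Ht) | Hn]; [left | right].
  - exists eta, theta. split; [reflexivity | split; [exact E |]].
    apply cut_below with y; auto; [lia | simpl in *; lia].
  - apply cut_below with y; auto; [lia | simpl; lia].
Qed.

Lemma dia_goal_reanchor_below phi phi' S D : size phi < s -> size phi' < s -> osize D <= s ->
  equiv phi phi' -> dia_goal phi' S D -> dia_goal phi S D.
Proof.
  intros H1 H2 HD E [(eta & theta & -> & E' & Ht) | Hn]; [left | now right].
  exists eta, theta. split; [reflexivity | split; [| exact Ht]].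
  apply equiv_trans_below with phi'; auto. simpl in HD. lia.
Qed.

Variables (G G' : list form) (D : option form).
Hypotheses (HG : bounded s G) (HG' : bounded s G') (HD : osize D <= s).

Lemma cut_box_principal Gm l phi psi : size (Box phi psi) <= s ->
  Permutation G (Gm ++ boxes l) -> equiv_all phi l -> derivable (map snd l) (Some psi) ->
  left_principal G (Box phi psi) G' D -> derivable (G ++ G') D.
Proof.
  intros Hs HP El Hpsi Hlp. simpl in Hs.
  assert (Hl : bounded (s - 1) (map fst l) /\ bounded (s - 1) (map snd l)).
  { apply bounded_boxes. pose proof (bounded_perm _ _ _ HG HP) as HB. now bounded_split HB. }
  destruct Hl as [Hl1 Hl2].
  inversion Hlp as [| | | ? ? ? Gm' l' phi' psi' HP' El' Hd
    | ? ? ? Gm' l' k' phi' psi' D' HP' El' Ek' Hd | |]; subst.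
  - assert (Hl' : bounded (s - 1) (map snd l')).
    { apply bounded_boxes. pose proof (bounded_perm _ _ _ HG' HP') as HB. now bounded_split HB. }
    simpl in HD. eapply der_box with (Gm := Gm ++ Gm') (l := l ++ l');
      [rewrite HP, HP', boxes_app; psolve
      | apply equiv_all_app; [| exact (equiv_all_tl _ _ _ El')] |].
    + apply (equiv_all_trans_below phi' phi); auto; try lia. apply (El' (phi, psi)). now left.
    + rewrite map_app. apply cut_below with psi; auto; try lia. simpl. lia.
  - pose proof (bounded_perm _ _ _ HG' HP') as HB. bounded_split HB.
    destruct HB as (_ & Hl' & Hk' & Hd' & _).
    apply bounded_boxes in Hl' as [_ Hl']. apply bounded_dias in Hk' as [_ Hk']. simpl in Hd'.
    eapply der_dia with (Gm := Gm ++ Gm') (l := l ++ l') (k := k') (phi := phi') (psi := psi');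
      [rewrite HP, HP', boxes_app; psolve | apply equiv_all_app; [| exact (equiv_all_tl _ _ _ El')]
      | exact Ek' |].
    + apply (equiv_all_trans_below phi' phi); auto; try lia. apply (El' (phi, psi)). now left.
    + rewrite map_app, <- app_assoc. apply dia_goal_cut_below with psi; auto; [lia |].
      apply Forall_app; split; [exact Hl' |]. bounded_solve.
Qed.

Lemma cut_dia_against Gm0 l0 k0 phi0 psi0 eta theta Gm l k phi :
  size (Dia eta theta) <= s -> size phi < s ->
  Permutation G (Gm0 ++ boxes l0 ++ dias k0 ++ [Dia phi0 psi0]) ->
  equiv_all phi0 l0 -> equiv_all phi0 k0 -> equiv phi0 eta ->
  derivable (map snd l0 ++ map snd k0 ++ [psi0]) (Some theta) ->
  Permutation G' (Gm ++ boxes l ++ dias k) -> equiv phi eta -> equiv_all phi l -> equiv_all phi k ->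
  dia_goal phi (theta :: map snd l ++ map snd k) D -> derivable (G ++ G') D.
Proof.
  intros Hs Hphi HP0 El0 Ek0 E0 Htheta HP E El Ek Hgoal. simpl in Hs.
  pose proof (bounded_perm _ _ _ HG HP0) as HG0. bounded_split HG0.
  destruct HG0 as (_ & Hl0 & Hk0 & Hd0 & _).
  apply bounded_boxes in Hl0 as [_ Hl0]. apply bounded_dias in Hk0 as [_ Hk0]. simpl in Hd0.
  pose proof (bounded_perm _ _ _ HG' HP) as HG1. bounded_split HG1. destruct HG1 as (_ & Hl & Hk).
  apply bounded_boxes in Hl as [Hl1 Hl2]. apply bounded_dias in Hk as [Hk1 Hk2].
  assert (E1 : equiv phi0 phi)
    by (apply equiv_trans_below with eta; [lia | lia
      | exact Hphi | exact E0 | now apply equiv_sym]).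
  eapply der_dia with (Gm := Gm0 ++ Gm) (l := l0 ++ l) (k := k0 ++ k) (phi := phi0) (psi := psi0).
  - rewrite HP0, HP, boxes_app, dias_app. psolve.
  - apply equiv_all_app; [exact El0 |]. apply (equiv_all_trans_below phi0 phi); auto; lia.
  - apply equiv_all_app; [exact Ek0 |]. apply (equiv_all_trans_below phi0 phi); auto; lia.
  - apply (dia_goal_reanchor_below phi0 phi); auto; [lia |].
    assert (Hcut : dia_goal phi ((map snd l0 ++ map snd k0 ++ [psi0]) ++ map snd l ++ map snd k) D)
      by (apply dia_goal_cut_below with theta; auto; [lia | bounded_solve | now apply Forall_app]).
    eapply dia_goal_perm; [exact Hcut | rewrite !map_app; psolve].
Qed.

Lemma cut_dia_principal Gm0 l0 k0 phi0 psi0 eta theta : size (Dia eta theta) <= s ->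
  Permutation G (Gm0 ++ boxes l0 ++ dias k0 ++ [Dia phi0 psi0]) ->
  equiv_all phi0 l0 -> equiv_all phi0 k0 -> equiv phi0 eta ->
  derivable (map snd l0 ++ map snd k0 ++ [psi0]) (Some theta) ->
  left_principal G (Dia eta theta) G' D -> derivable (G ++ G') D.
Proof.
  intros Hs HP0 El0 Ek0 E0 Htheta Hlp.
  inversion Hlp as [| | | | | ? ? ? Gm l k phi psi D' HP El Ek Hgoal
    | ? ? ? Gm l k D' HP El Ek Hgoal]; subst.
  - assert (Hphi : size phi < s).
    { pose proof (bounded_perm _ _ _ HG' HP) as HB. bounded_split HB. simpl in HB. lia. }
    apply (cut_dia_against Gm0 l0 k0 phi0 psi0 eta theta Gm l (k ++ [(phi, psi)]) phi); auto.
    + rewrite HP, dias_app. simpl. psolve.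
    + apply (Ek (eta, theta)). now left.
    + apply equiv_all_app; [exact (equiv_all_tl _ _ _ Ek) |]. intros rs [<- | []]. apply equiv_refl.
    + eapply dia_goal_perm; [exact Hgoal | rewrite map_app; simpl; psolve].
  - simpl in Hs. apply (cut_dia_against Gm0 l0 k0 phi0 psi0 eta theta Gm l k eta); auto; [lia |].
    apply equiv_refl.
Qed.

End ModalReductions.

Lemma boxes_Permutation_cons c M l : Permutation (boxes l) (c :: M) ->
  exists x y l', c = Box x y /\ Permutation l ((x, y) :: l') /\ Permutation M (boxes l').
Proof.
  intro HP. destruct (in_boxes c l (Permutation_cons_in _ _ _ HP)) as (x & y & -> & Hxy).
  destruct (in_Permutation_cons _ _ Hxy) as [l' Hl']. exists x, y, l'.
  split; [reflexivity | split; [exact Hl' |]].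
  apply Permutation_cons_inv with (Box x y). rewrite <- HP. unfold boxes. now rewrite Hl'.
Qed.

Lemma dias_Permutation_cons c M k : Permutation (dias k) (c :: M) ->
  exists x y k', c = Dia x y /\ Permutation k ((x, y) :: k') /\ Permutation M (dias k').
Proof.
  intro HP. destruct (in_dias c k (Permutation_cons_in _ _ _ HP)) as (x & y & -> & Hxy).
  destruct (in_Permutation_cons _ _ Hxy) as [k' Hk']. exists x, y, k'.
  split; [reflexivity | split; [exact Hk' |]].
  apply Permutation_cons_inv with (Dia x y). rewrite <- HP. unfold dias. now rewrite Hk'.
Qed.

Lemma map_snd_Permutation_cons (l l' : list (form * form)) x y :
  Permutation l ((x, y) :: l') -> Permutation (map snd l) (y :: map snd l').
Proof. intro H. exact (Permutation_map snd H). Qed.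

Lemma cut_right_box_rule G c G' Gm l phi psi :
  Permutation (c :: G') (Gm ++ boxes l) -> equiv_all phi l -> derivable (map snd l) (Some psi) ->
  (left_principal G c G' (Some (Box phi psi)) -> derivable (G ++ G') (Some (Box phi psi))) ->
  derivable (G ++ G') (Some (Box phi psi)).
Proof.
  intros HP El Hpsi Hprinc.
  destruct (Permutation_cons_app_cases _ _ _ _ HP) as [(Gm' & _ & HG') | (M & HM & HG')].
  - eapply der_box with (Gm := G ++ Gm') (l := l); [rewrite HG'; psolve | exact El | exact Hpsi].
  - destruct (boxes_Permutation_cons _ _ _ HM) as (x & y & l' & -> & Hl & HM').
    apply Hprinc. eapply lp_box_box; [rewrite HG', HM'; reflexivity
      | now apply (equiv_all_perm _ l) |].
    eapply der_perm; [exact Hpsi | exact (map_snd_Permutation_cons _ _ _ _ Hl)].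
Qed.

Lemma cut_right_dia_rule G c G' Gm l k phi psi D :
  Permutation (c :: G') (Gm ++ boxes l ++ dias k ++ [Dia phi psi]) ->
  equiv_all phi l -> equiv_all phi k -> dia_goal phi (map snd l ++ map snd k ++ [psi]) D ->
  (left_principal G c G' D -> derivable (G ++ G') D) -> derivable (G ++ G') D.
Proof.
  intros HP El Ek Hgoal Hprinc.
  destruct (Permutation_cons_app_cases _ _ _ _ HP) as [(Gm' & _ & HG') | (M & HM & HG')].
  { eapply der_dia with (Gm := G ++ Gm') (l := l) (k := k) (phi := phi) (psi := psi);
      [rewrite HG'; psolve | exact El | exact Ek | exact Hgoal]. }
  apply Permutation_sym in HM.
  destruct (Permutation_cons_app_cases _ _ _ _ HM) as [(Mb & HMb & HM') | (Md & HMd & HM')].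
  { destruct (boxes_Permutation_cons _ _ _ HMb) as (x & y & l' & -> & Hl & HMb').
    apply Hprinc. eapply lp_box_dia; [rewrite HG', HM', HMb'; reflexivity
      | now apply (equiv_all_perm _ l) | exact Ek |].
    eapply dia_goal_perm; [exact Hgoal | rewrite (map_snd_Permutation_cons _ _ _ _ Hl); psolve]. }
  apply Permutation_sym in HMd.
  destruct (Permutation_cons_app_cases _ _ _ _ HMd) as [(Mk & HMk & HMd') | (Mp & HMp & HMd')].
  - destruct (dias_Permutation_cons _ _ _ HMk) as (x & y & k' & -> & Hk & HMk').
    apply Hprinc. eapply lp_dia_side; [rewrite HG', HM', HMd', HMk'; reflexivity
      | exact El | now apply (equiv_all_perm _ k) |].
    eapply dia_goal_perm; [exact Hgoal | rewrite (map_snd_Permutation_cons _ _ _ _ Hk); psolve].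
  - apply Permutation_length_1_inv in HMp. injection HMp as -> ->.
    apply Hprinc. eapply lp_dia_main; [rewrite HG', HM', HMd', app_nil_r; reflexivity | exact El
      | exact Ek |].
    eapply dia_goal_perm; [exact Hgoal | psolve].
Qed.

Lemma dia_goal_of_SC n phi S eta theta : SC n [phi] (Some eta) -> SC n [eta] (Some phi) ->
  SC n S (Some theta) -> dia_goal phi S (Some (Dia eta theta)).
Proof.
  intros E1 E2 P. left. exists eta, theta. split; [reflexivity |]. split; [split |]; now exists n.
Qed.

Lemma cut_right_left_rule s G c d n G' Gm D :
  Permutation (c :: G') (d :: Gm) -> size c <= s -> bounded s G' -> osize D <= s ->
  left_premisses n d Gm D ->
  (forall G'' D', bounded s G'' -> osize D' <= s -> SC n (c :: G'') D' ->
     derivable (G ++ G'') D') ->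
  (left_principal G c G' D -> derivable (G ++ G') D) -> derivable (G ++ G') D.
Proof.
  intros HP Hc HG' HD Hprem IH Hprinc.
  destruct (Permutation_cons_cases _ _ _ _ HP) as [[-> Hp] | (r & Hr & Hr')].
  { apply Hprinc. destruct d as [| | a b | a b | a b | |]; try contradiction; simpl in Hprem.
    - apply lp_and. exists n. eapply SC_perm; [exact Hprem | now rewrite Hp].
    - destruct Hprem as [P1 P2].
      apply lp_or; exists n; eapply SC_perm;
        [exact P1 | now rewrite Hp | exact P2 | now rewrite Hp].
    - destruct Hprem as [P1 P2]. simpl in Hc.
      apply lp_imp; [| exists n; eapply SC_perm; [exact P2 | now rewrite Hp]].
      apply IH; [exact HG' | simpl; lia | eapply SC_perm; [exact P1 | now rewrite Hp]]. }
  pose proof (bounded_perm _ _ _ HG' Hr) as HB. bounded_split HB. destruct HB as [Hd Hr0].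
  destruct d as [| | a b | a b | a b | |]; try contradiction; simpl in Hprem, Hd.
  - apply der_andL with (G ++ r) a b; [rewrite Hr; psolve |].
    apply der_perm with (G ++ a :: b :: r); [| psolve].
    apply IH; [bounded_solve | exact HD | eapply SC_perm; [exact Hprem | rewrite Hr'; psolve]].
  - destruct Hprem as [P1 P2].
    apply der_orL with (G ++ r) a b; [rewrite Hr; psolve | |].
    + apply der_perm with (G ++ a :: r); [| psolve].
      apply IH; [bounded_solve | exact HD | eapply SC_perm; [exact P1 | rewrite Hr'; psolve]].
    + apply der_perm with (G ++ b :: r); [| psolve].
      apply IH; [bounded_solve | exact HD | eapply SC_perm; [exact P2 | rewrite Hr'; psolve]].
  - destruct Hprem as [P1 P2].
    apply der_impL with (G ++ r) a b; [rewrite Hr; psolve | |].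
    + apply der_perm with (G ++ Imp a b :: r); [| psolve].
      apply IH; [bounded_solve | simpl; lia | eapply SC_perm; [exact P1 | rewrite Hr'; psolve]].
    + apply der_perm with (G ++ b :: r); [| psolve].
      apply IH; [bounded_solve | exact HD | eapply SC_perm; [exact P2 | rewrite Hr'; psolve]].
Qed.

(** Permutes a cut on [c] upwards in the right premiss, until [c] becomes principal there. *)
Lemma cut_right s G c m G' D :
  SC m (c :: G') D -> (forall p, c <> Var p) -> c <> Bot ->
  size c <= s -> bounded s G' -> osize D <= s ->
  (forall m' G'' D', m' < m -> bounded s G'' -> osize D' <= s -> SC m' (c :: G'') D' ->
     derivable (G ++ G'') D') ->
  (left_principal G c G' D -> derivable (G ++ G') D) -> derivable (G ++ G') D.
Proof.
  intros R Hv Hb Hc HG' HD IH Hprinc. remember (c :: G') as G0 eqn:HG0.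
  destruct R as [n G0 Gm p HP | n G0 Gm D HP | n G0 Gm a b D HP P | n G0 a b P1 P2
    | n G0 Gm a b D HP P1 P2 | n G0 a b P | n G0 a b P | n G0 a b P | n G0 Gm a b D HP P1 P2
    | n G0 Gm l phi psi HP C1 C2 P | n G0 Gm l k phi psi eta theta HP C1 C2 C3 C4 E1 E2 P
    | n G0 Gm l k phi psi D HP C1 C2 C3 C4 P]; subst G0.
  - destruct (Permutation_cons_cases _ _ _ _ HP) as [[-> _] | (r & Hr & _)];
      [now destruct (Hv p) |].
    apply der_init, in_or_app. right. exact (Permutation_cons_in _ _ _ Hr).
  - destruct (Permutation_cons_cases _ _ _ _ HP) as [[-> _] | (r & Hr & _)]; [easy |].
    apply der_botL, in_or_app. right. exact (Permutation_cons_in _ _ _ Hr).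
  - apply (cut_right_left_rule s G c (And a b) n G' Gm D); auto.
    intros G'' D'. apply IH. lia.
  - simpl in HD. apply der_andR; apply (IH n); auto; simpl; lia.
  - apply (cut_right_left_rule s G c (Or a b) n G' Gm D); auto;
      [now split | intros G'' D'; apply IH; lia].
  - simpl in HD. apply der_orR1, (IH n); auto; simpl; lia.
  - simpl in HD. apply der_orR2, (IH n); auto; simpl; lia.
  - simpl in HD. apply der_impR. apply der_perm with (G ++ a :: G'); [apply (IH n) | psolve]; [lia
      | bounded_solve | simpl; lia |].
    eapply SC_perm; [exact P | psolve].
  - apply (cut_right_left_rule s G c (Imp a b) n G' Gm D); auto;
      [now split | intros G'' D'; apply IH; lia].
  - apply (cut_right_box_rule G c G' Gm l); [exact HP | exact (SC_equiv_all n _ _ C1 C2)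
      | now exists n | exact Hprinc].
  - apply (cut_right_dia_rule G c G' Gm l k phi psi); [exact HP | exact (SC_equiv_all n _ _ C1 C2)
      | exact (SC_equiv_all n _ _ C3 C4) | now apply dia_goal_of_SC with n | exact Hprinc].
  - apply (cut_right_dia_rule G c G' Gm l k phi psi); [exact HP | exact (SC_equiv_all n _ _ C1 C2)
      | exact (SC_equiv_all n _ _ C3 C4) | right; now exists n | exact Hprinc].
Qed.

Lemma cut_left_rule s c d n G Gm G' D :
  Permutation G (d :: Gm) -> bounded s G -> left_premisses n d Gm (Some c) ->
  (forall G0, bounded s G0 -> SC n G0 (Some c) -> derivable (G0 ++ G') D) ->
  derivable (G ++ G') D.
Proof.
  intros HP HG Hprem IH.
  pose proof (bounded_perm _ _ _ HG HP) as HB. bounded_split HB. destruct HB as [Hd HGm].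
  destruct d as [| | a b | a b | a b | |]; try contradiction; simpl in Hprem, Hd.
  - apply der_andL with (Gm ++ G') a b; [rewrite HP; psolve |].
    apply (IH (a :: b :: Gm)); [bounded_solve | exact Hprem].
  - destruct Hprem as [P1 P2]. apply der_orL with (Gm ++ G') a b; [rewrite HP; psolve | |].
    + apply (IH (a :: Gm)); [bounded_solve | exact P1].
    + apply (IH (b :: Gm)); [bounded_solve | exact P2].
  - destruct Hprem as [P1 P2]. apply der_impL with (Gm ++ G') a b; [rewrite HP; psolve | |].
    + exists n. eapply SC_incl; [exact P1 | incl_solve].
    + apply (IH (b :: Gm)); [bounded_solve | exact P2].
Qed.

Lemma cut_by_height s c : size c <= s ->
  (forall c', size c' <= s - 1 -> cut_at (s - 1) c') -> (forall a, size a < size c -> cut_at s a) ->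
  forall h n m G G' D, n + m <= h -> bounded s G -> bounded s G' -> osize D <= s ->
  SC n G (Some c) -> SC m (c :: G') D -> derivable (G ++ G') D.
Proof.
  intros Hc Cbelow Csub h. induction h as [h IHh] using (well_founded_induction lt_wf).
  intros n m G G' D Hh HG HG' HD L R.
  assert (IHr : forall m' G'' D', m' < m -> bounded s G'' -> osize D' <= s ->
            SC m' (c :: G'') D' -> derivable (G ++ G'') D')
    by (intros m' G'' D' Hm' HG'' HD' R';
      exact (IHh (n + m') ltac:(lia) n m' G G'' D' (le_n _) HG HG'' HD' L R')).
  assert (Hright : (forall p, c <> Var p) -> c <> Bot ->
            (left_principal G c G' D -> derivable (G ++ G') D) -> derivable (G ++ G') D)
    by (intros Hv Hb; exact (cut_right s G c m G' D R Hv Hb Hc HG' HD IHr)).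
  remember (Some c) as Dc eqn:HDc. revert Hh HG Hright.
  destruct L as [n G Gm p HP | n G Gm Dc HP | n G Gm a b Dc HP P | n G a b P1 P2
    | n G Gm a b Dc HP P1 P2 | n G a b P | n G a b P | n G a b P | n G Gm a b Dc HP P1 P2
    | n G Gm l phi psi HP C1 C2 P | n G Gm l k phi psi eta theta HP C1 C2 C3 C4 E1 E2 P
    | n G Gm l k phi psi Dc HP C1 C2 C3 C4 P]; intros Hh HG Hright.
  - injection HDc as <-. exists m. eapply SC_incl; [exact R |].
    intros y [<- | Hy]; apply in_or_app; [left; exact (Permutation_cons_in _ _ _ HP) | now right].
  - apply der_botL, in_or_app. left. exact (Permutation_cons_in _ _ _ HP).
  - subst Dc. apply (cut_left_rule s c (And a b) n G Gm G' D HP HG P).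
    intros G0 HG0 L0. exact (IHh (n + m) ltac:(lia) n m G0 G' D (le_n _) HG0 HG' HD L0 R).
  - injection HDc as <-. apply Hright; [easy | easy |].
    apply (cut_and_principal s); auto; [apply Csub; simpl; lia .. | now exists n | now exists n].
  - subst Dc. apply (cut_left_rule s c (Or a b) n G Gm G' D HP HG (conj P1 P2)).
    intros G0 HG0 L0. exact (IHh (n + m) ltac:(lia) n m G0 G' D (le_n _) HG0 HG' HD L0 R).
  - injection HDc as <-. apply Hright; [easy | easy |].
    apply (cut_or_principal s); auto; [apply Csub; simpl; lia .. | left; exists n; exact P].
  - injection HDc as <-. apply Hright; [easy | easy |].
    apply (cut_or_principal s); auto; [apply Csub; simpl; lia .. | right; exists n; exact P].
  - injection HDc as <-. apply Hright; [easy | easy |].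
    apply (cut_imp_principal s); auto; [apply Csub; simpl; lia .. | exists n; exact P].
  - subst Dc. apply (cut_left_rule s c (Imp a b) n G Gm G' D HP HG (conj P1 P2)).
    intros G0 HG0 L0. exact (IHh (n + m) ltac:(lia) n m G0 G' D (le_n _) HG0 HG' HD L0 R).
  - injection HDc as <-. apply Hright; [easy | easy |].
    eapply (cut_box_principal s); eauto. now apply SC_equiv_all with n. now exists n.
  - injection HDc as <-. apply Hright; [easy | easy |].
    eapply (cut_dia_principal s); eauto; [now apply SC_equiv_all with n .. | split; now exists n
      | now exists n].
  - exists (S n).
    eapply SC_boxdia_cem with (Gm := Gm ++ G') (l := l) (k := k) (phi := phi) (psi := psi);
      [rewrite HP; psolve | assumption ..].
Qed.

Lemma cut_at_bounded s c : size c <= s -> cut_at s c.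
Proof.
  revert c. induction s as [s IHs] using (well_founded_induction lt_wf).
  intro c. induction c as [c IHc] using (induction_ltof1 _ size).
  intros Hc G G' D HG HG' HD [n L] [m R].
  apply (cut_by_height s c Hc) with (n + m) n m; auto.
  - intros c' Hc'. pose proof (size_pos c). apply IHs; lia.
  - intros a Ha. apply IHc; [exact Ha | lia].
Qed.

Lemma size_le_list_sum x G : In x G -> size x <= list_sum (map size G).
Proof.
  induction G as [|y G IH]; simpl; [easy |]. intros [-> | H]; [lia | specialize (IH H); lia].
Qed.

Theorem cut_admissible G G' D c :
  derivable G (Some c) -> derivable (c :: G') D -> derivable (G ++ G') D.
Proof.
  set (s := size c + list_sum (map size G) + list_sum (map size G') + osize D).
  apply (cut_at_bounded s c); [unfold s; lia | | | unfold s; lia];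
    apply Forall_forall; intros x Hx; apply size_le_list_sum in Hx; unfold s; lia.
Qed.

(** * From ConstCKCEM to the calculus *)

Ltac in_solve := simpl; tauto.

Lemma der_andL_in G a b D : In (And a b) G -> derivable (a :: b :: G) D -> derivable G D.
Proof.
  intros Hin H. apply der_incl with (And a b :: G); [| now apply incl_cons].
  now apply der_andL with G a b.
Qed.

Lemma der_orL_in G a b D : In (Or a b) G ->
  derivable (a :: G) D -> derivable (b :: G) D -> derivable G D.
Proof.
  intros Hin H1 H2. apply der_incl with (Or a b :: G); [| now apply incl_cons].
  now apply der_orL with G a b.
Qed.

Lemma der_impL_in G a b D : In (Imp a b) G ->
  derivable G (Some a) -> derivable (b :: G) D -> derivable G D.
Proof.
  intros Hin H1 H2. apply der_incl with (Imp a b :: G); [| now apply incl_cons].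
  apply der_impL with G a b; [reflexivity | | exact H2].
  eapply der_incl; [exact H1 | apply incl_tl, incl_refl].
Qed.

Lemma der_imp_inv a b : derivable [] (Some (Imp a b)) -> derivable [a] (Some b).
Proof.
  intro H. apply (cut_admissible [] [a] (Some b) (Imp a b) H).
  apply der_impL_in with a b; [in_solve | apply der_in; in_solve | apply der_id].
Qed.

Lemma der_and_inv a b :
  derivable [] (Some (And a b)) -> derivable [] (Some a) /\ derivable [] (Some b).
Proof.
  intro H. split; apply (cut_admissible [] [] _ (And a b) H);
    apply der_andL_in with a b; try in_solve; apply der_in; in_solve.
Qed.

Lemma der_iff_inv a b : derivable [] (Some (Iff a b)) -> equiv a b.
Proof. intro H. apply der_and_inv in H as [H1 H2]. split; now apply der_imp_inv. Qed.

Lemma der_mp a b : derivable [] (Some (Imp a b)) -> derivable [] (Some a) -> derivable [] (Some b).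
Proof. intros H1 H2. apply (cut_admissible [] [] _ a H2), der_imp_inv, H1. Qed.

Lemma equiv_all_single phi a b : equiv phi a -> equiv_all phi [(a, b)].
Proof. now intros E rs [<- | []]. Qed.

Lemma der_box_single G phi a b psi : In (Box a b) G -> equiv phi a ->
  derivable [b] (Some psi) -> derivable G (Some (Box phi psi)).
Proof.
  intros Hin E H. destruct (in_Permutation_cons _ _ Hin) as [G0 HG0].
  apply der_box with G0 [(a, b)]; [rewrite HG0; simpl; psolve | now apply equiv_all_single |].
  exact H.
Qed.

Lemma der_dia_single G phi psi eta theta : In (Dia phi psi) G -> equiv phi eta ->
  derivable [psi] (Some theta) -> derivable G (Some (Dia eta theta)).
Proof.
  intros Hin E H. destruct (in_Permutation_cons _ _ Hin) as [G0 HG0].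
  apply der_dia with G0 [] [] phi psi; [rewrite HG0; simpl; psolve | easy | easy |].
  left. exists eta, theta. auto.
Qed.

Lemma der_CM_box a b c : derivable [] (Some (Imp (Box a (And b c)) (And (Box a b) (Box a c)))).
Proof.
  apply der_impR, der_andR;
    (apply der_box_single with a (And b c); [in_solve | apply equiv_refl |]);
    apply der_andL_in with b c; try in_solve; apply der_in; in_solve.
Qed.

Lemma der_CC_box a b c : derivable [] (Some (Imp (And (Box a b) (Box a c)) (Box a (And b c)))).
Proof.
  apply der_impR, der_andL_in with (Box a b) (Box a c); [in_solve |].
  apply der_box with [And (Box a b) (Box a c)] [(a, b); (a, c)]; [simpl; psolve | |].
  - intros rs [<- | [<- | []]]; apply equiv_refl.
  - apply der_andR; apply der_in; in_solve.
Qed.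

Lemma der_CN_box a : derivable [] (Some (Box a Top)).
Proof. apply der_box with [] []; [reflexivity | easy |]. apply der_impR, der_botL. in_solve. Qed.

Lemma der_CN_dia a : derivable [] (Some (Neg (Dia a Bot))).
Proof.
  apply der_impR, der_dia with [] [] [] a Bot; [reflexivity | easy | easy |].
  right. apply der_botL. in_solve.
Qed.

Lemma der_CK_dia a b c : derivable [] (Some (Imp (Box a (Imp b c)) (Imp (Dia a b) (Dia a c)))).
Proof.
  apply der_impR, der_impR, der_dia with [] [(a, Imp b c)] [] a b;
    [simpl; psolve | now apply equiv_all_single, equiv_refl | easy |].
  left. exists a, c. split; [reflexivity | split; [apply equiv_refl |]].
  apply der_impL_in with b c; [in_solve | apply der_in; in_solve | apply der_id].
Qed.

Lemma der_CEM_dia a b c : derivable [] (Some (Imp (And (Dia a b) (Dia a c)) (Dia a (And b c)))).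
Proof.
  apply der_impR, der_andL_in with (Dia a b) (Dia a c); [in_solve |].
  apply der_dia with [And (Dia a b) (Dia a c)] [] [(a, b)] a c;
    [simpl; psolve | easy | now apply equiv_all_single, equiv_refl |].
  left. exists a, (And b c). split; [reflexivity | split; [apply equiv_refl |]].
  apply der_andR; apply der_in; in_solve.
Qed.

Lemma der_box_congr a r b c :
  equiv a r -> equiv b c -> derivable [] (Some (Iff (Box a b) (Box r c))).
Proof.
  intros [Ear Era] [Ebc Ecb]. apply der_andR; apply der_impR.
  - apply der_box_single with a b; [in_solve | now split | exact Ebc].
  - apply der_box_single with r c; [in_solve | now split | exact Ecb].
Qed.

Lemma der_dia_congr a r b c :
  equiv a r -> equiv b c -> derivable [] (Some (Iff (Dia a b) (Dia r c))).
Proof.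
  intros [Ear Era] [Ebc Ecb]. apply der_andR; apply der_impR.
  - apply der_dia_single with a b; [in_solve | now split | exact Ebc].
  - apply der_dia_single with r c; [in_solve | now split | exact Ecb].
Qed.

Theorem hilbert_to_sequent A : ConstCKCEM A -> derivable [] (Some A).
Proof.
  induction 1.
  - apply der_impR, der_impR, der_in. in_solve.
  - apply der_impR, der_impR, der_impR.
    apply der_impL_in with a (Imp b c); [in_solve | apply der_in; in_solve |].
    apply der_impL_in with b c; [in_solve | | apply der_id].
    apply der_impL_in with a b; [in_solve | apply der_in; in_solve | apply der_id].
  - apply der_impR, der_andL_in with a b; [in_solve | apply der_in; in_solve].
  - apply der_impR, der_andL_in with a b; [in_solve | apply der_in; in_solve].
  - apply der_impR, der_impR, der_andR; apply der_in; in_solve.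
  - apply der_impR, der_orR1, der_id.
  - apply der_impR, der_orR2, der_id.
  - apply der_impR, der_impR, der_impR, der_orL_in with a b; [in_solve | |].
    + apply der_impL_in with a c; [in_solve | apply der_id | apply der_id].
    + apply der_impL_in with b c; [in_solve | apply der_id | apply der_id].
  - apply der_impR, der_botL. in_solve.
  - eapply der_mp; eassumption.
  - apply der_CM_box.
  - apply der_CC_box.
  - apply der_CN_box.
  - apply der_CN_dia.
  - apply der_CK_dia.
  - apply der_box_congr; [now apply der_iff_inv | apply equiv_refl].
  - apply der_box_congr; [apply equiv_refl | now apply der_iff_inv].
  - apply der_dia_congr; [now apply der_iff_inv | apply equiv_refl].
  - apply der_dia_congr; [apply equiv_refl | now apply der_iff_inv].
  - apply der_CEM_dia.
Qed.

(** * From the calculus to ConstCKCEM *)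

(** [entails [x1; ...; xn] A] is the theorem [xn -> ... -> x1 -> A]. *)
Definition entails (Gam : list form) (A : form) : Prop :=
  ConstCKCEM (fold_left (fun acc x => Imp x acc) Gam A).

Lemma entails_cons x Gam A : entails (x :: Gam) A = entails Gam (Imp x A).
Proof. reflexivity. Qed.

Lemma thm_imp_refl a : ConstCKCEM (Imp a a).
Proof.
  apply MP with (Imp a (Imp a a)); [| apply A1].
  apply MP with (Imp a (Imp (Imp a a) a)); [apply A2 | apply A1].
Qed.

Lemma entails_thm A Gam : ConstCKCEM A -> entails Gam A.
Proof.
  revert A. induction Gam as [|x Gam IH]; intros A H; [exact H |].
  rewrite entails_cons. apply IH, MP with A; [apply A1 | exact H].
Qed.

Lemma entails_mp Gam A B : entails Gam (Imp A B) -> entails Gam A -> entails Gam B.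
Proof.
  revert A B. induction Gam as [|x Gam IH]; intros A B H1 H2; [eapply MP; eassumption |].
  rewrite entails_cons in *. apply IH with (Imp x A); [| exact H2].
  apply IH with (Imp x (Imp A B)); [apply entails_thm, A2 | exact H1].
Qed.

Lemma entails_imp1 Gam A B : ConstCKCEM (Imp A B) -> entails Gam A -> entails Gam B.
Proof. intros H1 H2. eapply entails_mp; [apply entails_thm; exact H1 | exact H2]. Qed.

Lemma entails_imp2 Gam A B C :
  ConstCKCEM (Imp A (Imp B C)) -> entails Gam A -> entails Gam B -> entails Gam C.
Proof. intros H1 H2 H3. eapply entails_mp; [eapply entails_imp1 |]; eassumption. Qed.

Lemma entails_weaken Gam x A : entails Gam A -> entails (x :: Gam) A.
Proof. intro H. rewrite entails_cons. eapply entails_imp1; [apply A1 | exact H]. Qed.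

Lemma entails_in Gam A : In A Gam -> entails Gam A.
Proof.
  induction Gam as [|x Gam IH]; [intros [] |]; intros [-> | H].
  - rewrite entails_cons. apply entails_thm, thm_imp_refl.
  - apply entails_weaken. auto.
Qed.

Lemma entails_trans Gam Del A : entails Gam A -> (forall x, In x Gam -> entails Del x)
  -> entails Del A.
Proof.
  revert A. induction Gam as [|x Gam IH]; intros A H HD; [now apply entails_thm |].
  rewrite entails_cons in H. apply entails_mp with x; [| apply HD; now left].
  apply IH; [exact H | intros y Hy; apply HD; now right].
Qed.

Lemma entails_incl Gam Del A : entails Gam A -> incl Gam Del -> entails Del A.
Proof.
  intros H Hi. apply entails_trans with Gam; [exact H | intros x Hx; apply entails_in, Hi, Hx].
Qed.

Lemma thm_iff_intro a b : ConstCKCEM (Imp a b) -> ConstCKCEM (Imp b a) -> ConstCKCEM (Iff a b).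
Proof.
  intros H1 H2. apply MP with (Imp b a); [apply MP with (Imp a b); [apply A5 |] |]; assumption.
Qed.

Lemma thm_iff_l a b : ConstCKCEM (Iff a b) -> ConstCKCEM (Imp a b).
Proof. intro H. apply MP with (Iff a b); [apply A3 | exact H]. Qed.

Lemma thm_iff_r a b : ConstCKCEM (Iff a b) -> ConstCKCEM (Imp b a).
Proof. intro H. apply MP with (Iff a b); [apply A4 | exact H]. Qed.

Lemma thm_box_antecedent phi rho sig : ConstCKCEM (Imp phi rho) -> ConstCKCEM (Imp rho phi) ->
  ConstCKCEM (Imp (Box rho sig) (Box phi sig)).
Proof. intros H1 H2. apply thm_iff_r, RA_box, thm_iff_intro; assumption. Qed.

Lemma thm_dia_antecedent phi rho sig : ConstCKCEM (Imp phi rho) -> ConstCKCEM (Imp rho phi) ->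
  ConstCKCEM (Imp (Dia rho sig) (Dia phi sig)).
Proof. intros H1 H2. apply thm_iff_r, RA_dia, thm_iff_intro; assumption. Qed.

(** Via [A <-> A /\ B], RC and CM. *)
Lemma thm_box_mono phi A B : ConstCKCEM (Imp A B) -> ConstCKCEM (Imp (Box phi A) (Box phi B)).
Proof.
  intro H. assert (HI : ConstCKCEM (Iff A (And A B))).
  { apply thm_iff_intro; [| apply A3].
    change (entails [A] (And A B)). apply entails_imp2 with A B; [apply A5 | |];
      [| eapply entails_imp1; [exact H |]]; apply entails_in; now left. }
  change (entails [Box phi A] (Box phi B)).
  apply entails_imp1 with (And (Box phi A) (Box phi B)); [apply A4 |].
  apply entails_imp1 with (Box phi (And A B)); [apply CM_box |].
  apply entails_imp1 with (Box phi A); [apply thm_iff_l, RC_box, HI | apply entails_in; now left].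
Qed.

Lemma entails_conj_elim L last y : In y (L ++ [last]) -> entails [fold_right And last L] y.
Proof.
  induction L as [|x L IH]; simpl; intros Hy.
  - destruct Hy as [<- | []]. apply entails_in. now left.
  - destruct Hy as [-> | Hy].
    + apply entails_imp1 with (And y (fold_right And last L)); [apply A3 | apply entails_in;
        now left].
    + apply entails_trans with [fold_right And last L]; [now apply IH |].
      intros z [<- | []]. apply entails_imp1 with (And x (fold_right And last L)); [apply A4
        | apply entails_in; now left].
Qed.

Definition thm_equiv_all (phi : form) (l : list (form * form)) : Prop :=
  forall rs, In rs l -> ConstCKCEM (Imp phi (fst rs)) /\ ConstCKCEM (Imp (fst rs) phi).

Lemma entails_box_collect Gam phi l : thm_equiv_all phi l ->
  (forall rs, In rs l -> In (Box (fst rs) (snd rs)) Gam) ->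
  entails Gam (Box phi (fold_right And Top (map snd l))).
Proof.
  induction l as [|[rho sig] l IH]; intros HE HI; [apply entails_thm, CN_box |].
  simpl. apply entails_imp1 with (And (Box phi sig) (Box phi (fold_right And Top (map snd l))));
    [apply CC_box |].
  apply entails_imp2 with (Box phi sig) (Box phi (fold_right And Top (map snd l))); [apply A5 | |].
  - destruct (HE (rho, sig) (or_introl eq_refl)) as [H1 H2].
    apply entails_imp1 with (Box rho sig); [now apply thm_box_antecedent |].
    apply entails_in, (HI (rho, sig)). now left.
  - apply IH; intros rs Hrs; [apply HE | apply HI]; now right.
Qed.

Lemma entails_dia_collect Gam phi psi k : thm_equiv_all phi k ->
  (forall rs, In rs k -> In (Dia (fst rs) (snd rs)) Gam) -> entails Gam (Dia phi psi) ->
  entails Gam (Dia phi (fold_right And psi (map snd k))).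
Proof.
  induction k as [|[xi chi] k IH]; intros HE HI HP; [exact HP |].
  simpl. apply entails_imp1 with (And (Dia phi chi) (Dia phi (fold_right And psi (map snd k))));
    [apply CEM_dia |].
  apply entails_imp2 with (Dia phi chi) (Dia phi (fold_right And psi (map snd k))); [apply A5 | |].
  - destruct (HE (xi, chi) (or_introl eq_refl)) as [H1 H2].
    apply entails_imp1 with (Dia xi chi); [now apply thm_dia_antecedent |].
    apply entails_in, (HI (xi, chi)). now left.
  - apply IH; [intros rs Hrs; apply HE; now right | intros rs Hrs; apply HI; now right | exact HP].
Qed.

Lemma entails_dia_rule Gam Gm l k phi psi theta :
  Permutation Gam (Gm ++ boxes l ++ dias k ++ [Dia phi psi]) ->
  thm_equiv_all phi l -> thm_equiv_all phi k ->
  entails (map snd l ++ map snd k ++ [psi]) theta -> entails Gam (Dia phi theta).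
Proof.
  intros HP Hl Hk Hm.
  set (B := fold_right And Top (map snd l)). set (C := fold_right And psi (map snd k)).
  assert (HinG : forall x, In x (boxes l ++ dias k ++ [Dia phi psi]) -> In x Gam)
    by (intros x Hx; exact (Permutation_app_in_r _ _ _ _ HP Hx)).
  assert (HB : entails Gam (Box phi B)).
  { apply entails_box_collect; [exact Hl |]. intros rs Hrs. apply HinG, in_or_app. left.
    now apply in_boxes_intro. }
  assert (HC : entails Gam (Dia phi C)).
  { apply entails_dia_collect; [exact Hk | |].
    - intros rs Hrs. apply HinG. rewrite !in_app_iff. right; left. now apply in_dias_intro.
    - apply entails_in, HinG. rewrite !in_app_iff. now right; right; left. }
  assert (HBC : ConstCKCEM (Imp B (Imp C theta))).
  { change (entails [C; B] theta). apply entails_trans with (1 := Hm).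
    intros y Hy. apply in_app_or in Hy as [Hy | Hy].
    - apply entails_weaken, entails_conj_elim, in_or_app. now left.
    - apply entails_incl with [C]; [now apply entails_conj_elim | apply incl_cons; [now left
        | easy]]. }
  apply entails_mp with (Dia phi C); [| exact HC].
  apply entails_imp1 with (Box phi (Imp C theta)); [apply CK_dia |].
  apply entails_imp1 with (Box phi B); [now apply thm_box_mono | exact HB].
Qed.

Lemma thm_equiv_all_intro phi l :
  (forall rs, In rs l -> entails [phi] (fst rs)) -> (forall rs, In rs l -> entails [fst rs] phi) ->
  thm_equiv_all phi l.
Proof. intros H1 H2 rs Hrs. split; [apply H1 | apply H2]; exact Hrs. Qed.

Theorem sequent_to_entails n G D : SC n G D -> entails G (bigOr D).
Proof.
  induction 1 as [n G Gm p HP | n G Gm D HP | n G Gm a b D HP P IH | n G a b P1 IH1 P2 IH2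
    | n G Gm a b D HP P1 IH1 P2 IH2 | n G a b P IH | n G a b P IH | n G a b P IH
    | n G Gm a b D HP P1 IH1 P2 IH2 | n G Gm l phi psi HP C1 IC1 C2 IC2 P IH
    | n G Gm l k phi psi eta theta HP C1 IC1 C2 IC2 C3 IC3 C4 IC4 E1 IE1 E2 IE2 P IH
    | n G Gm l k phi psi D HP C1 IC1 C2 IC2 C3 IC3 C4 IC4 P IH]; simpl in *.
  - exact (entails_in _ _ (Permutation_cons_in _ _ _ HP)).
  - eapply entails_imp1; [apply A9 | exact (entails_in _ _ (Permutation_cons_in _ _ _ HP))].
  - apply entails_trans with (1 := IH). intros y [<- | [<- | Hy]].
    + eapply entails_imp1; [apply A3 | exact (entails_in _ _ (Permutation_cons_in _ _ _ HP))].
    + eapply entails_imp1; [apply A4 | exact (entails_in _ _ (Permutation_cons_in _ _ _ HP))].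
    + exact (entails_in _ _ (Permutation_cons_in_tail _ _ _ _ HP Hy)).
  - now apply entails_imp2 with a b; [apply A5 | |].
  - rewrite entails_cons in IH1, IH2.
    apply entails_mp with (Or a b); [| exact (entails_in _ _ (Permutation_cons_in _ _ _ HP))].
    apply entails_imp2 with (Imp a (bigOr D)) (Imp b (bigOr D)); [apply A8 | |];
      (eapply entails_incl; [eassumption | intros y Hy; eapply Permutation_cons_in_tail; eauto]).
  - now apply entails_imp1 with a; [apply A6 |].
  - now apply entails_imp1 with b; [apply A7 |].
  - exact IH.
  - assert (Ha : entails G a).
    { eapply entails_incl; [exact IH1 |]. apply incl_cons; [exact (Permutation_cons_in _ _ _ HP) |].
      intros y Hy. eapply Permutation_cons_in_tail; eauto. }
    apply entails_trans with (1 := IH2). intros y [<- | Hy].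
    + apply entails_mp with a; [exact (entails_in _ _ (Permutation_cons_in _ _ _ HP)) | exact Ha].
    + exact (entails_in _ _ (Permutation_cons_in_tail _ _ _ _ HP Hy)).
  - apply entails_mp with (Box phi (fold_right And Top (map snd l))).
    + apply entails_thm, thm_box_mono. change (entails [fold_right And Top (map snd l)] psi).
      apply entails_trans with (1 := IH). intros y Hy. apply entails_conj_elim, in_or_app. now left.
    + apply entails_box_collect; [now apply thm_equiv_all_intro |].
      intros rs Hrs. apply (Permutation_app_in_r _ _ _ _ HP). now apply in_boxes_intro.
  - eapply entails_imp1; [apply thm_iff_l, RA_dia, thm_iff_intro; eassumption |].
    eapply entails_dia_rule; [exact HP | now apply thm_equiv_all_intro .. | exact IH].
  - eapply entails_imp1; [apply A9 |]. apply entails_mp with (Dia phi Bot); [apply entails_thm,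
      CN_dia |].
    eapply entails_dia_rule; [exact HP | now apply thm_equiv_all_intro .. | exact IH].
Qed.

Lemma entails_bigAnd G y : G <> [] -> In y G -> entails [bigAnd G] y.
Proof.
  induction G as [|a [|b G] IH]; intros Hne Hy; [easy | |].
  - destruct Hy as [<- | []]. apply entails_in. now left.
  - change (bigAnd (a :: b :: G)) with (And a (bigAnd (b :: G))). destruct Hy as [<- | Hy].
    + eapply entails_imp1; [apply A3 | apply entails_in; now left].
    + apply entails_trans with [bigAnd (b :: G)]; [now apply IH |].
      intros z [<- | []]. eapply entails_imp1; [apply A4 | apply entails_in; now left].
Qed.

Lemma der_bigAnd G : G <> [] -> derivable G (Some (bigAnd G)).
Proof.
  induction G as [|a [|b G] IH]; intro Hne; [easy | apply der_id |].
  change (bigAnd (a :: b :: G)) with (And a (bigAnd (b :: G))).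
  apply der_andR; [apply der_id |]. eapply der_incl; [now apply IH | apply incl_tl, incl_refl].
Qed.

Lemma der_bigOr G D : derivable G (Some (bigOr D)) -> derivable G D.
Proof.
  destruct D as [x |]; simpl; intro H; [exact H |].
  rewrite <- (app_nil_r G). apply (cut_admissible G [] None Bot H), der_botL. now left.
Qed.

Theorem derivable_iff_iota G D : derivable G D <-> ConstCKCEM (iota G D).
Proof.
  split.
  - intros [n H]. apply sequent_to_entails in H. destruct G as [|a G]; [exact H |].
    apply (entails_trans _ [bigAnd (a :: G)] _ H). intros y Hy.
    now apply entails_bigAnd.
  - intro H. apply hilbert_to_sequent in H. apply der_bigOr. destruct G as [|a G]; [exact H |].
    rewrite <- (app_nil_r (a :: G)). apply (cut_admissible _ [] _ (bigAnd (a :: G))).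
    + now apply der_bigAnd.
    + now apply der_imp_inv.
Qed.

Theorem theorem13 :
  (* w_L is height-preserving admissible *)
  (forall (n : nat) (G : list form) (D : option form) (phi : form),
      SC n G D -> SC n (G ++ [phi]) D) /\
  (* w_R is height-preserving admissible *)
  (forall (n : nat) (G : list form) (phi : form),
      SC n G None -> SC n G (Some phi)) /\
  (* contraction is height-preserving admissible *)
  (forall (n : nat) (G : list form) (D : option form) (phi : form),
      SC n (G ++ [phi; phi]) D -> SC n (G ++ [phi]) D) /\
  (* cut is admissible *)
  (forall (G G' : list form) (D : option form) (phi : form),
      derivable G (Some phi) -> derivable (G' ++ [phi]) D ->
      derivable (G ++ G') D) /\
  (* soundness and completeness w.r.t. ConstCKCEM *)
  (forall (G : list form) (D : option form),
      derivable G D <-> ConstCKCEM (iota G D)).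
Proof.
  split; [| split; [| split; [| split]]].
  - intros n G D phi H. eapply SC_incl; [exact H | apply incl_appl, incl_refl].
  - intros n G phi. apply SC_weaken_right.
  - intros n G D phi H. eapply SC_incl; [exact H | incl_solve].
  - intros G G' D phi H1 H2. apply cut_admissible with phi; [exact H1 |].
    eapply der_perm; [exact H2 | psolve].
  - exact derivable_iff_iota.
Qed.
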